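(* Let $r>0$ and let $f$ be analytic on an open neighbourhood of the closed half-disc $D_r:=\overline{B}_r(0)\cap\overline{\mathbb C}_+$. Let $Y,\eta$ be parameters with $0<\eta<Y<r$, and let $\alpha,\beta\in(0,1)$ satisfy $$\beta\Big(\frac{1-\alpha}{\alpha+\beta}\Big)^2>\frac{Y}{\eta}.$$ Let $N(\alpha r)$ be the number of zeros of $f$, counted with multiplicity, in $D_{\alpha r,\eta,Y}:=\{z\in\mathbb C:\eta\le\operatorname{Im}z\le Y,\ |z|\le\alpha r\}$. Then, if $f(i\beta r)\ne0$, $$N(\alpha r)\le\frac{2}{\log\Lambda(r)}\log\Big(\frac{1}{\min\{\beta,1-\beta\}}\frac{\sup_{z\in\partial D_r}|f(z)|}{|f(i\beta r)|}\Big),\qquad \Lambda(r):=\frac{1+\frac{4\beta\eta}{(\alpha+\beta)^2}\frac1r}{1+\frac{4Y}{(1-\alpha)^2}\frac1r},$$ and $\Lambda(r)>1$.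
   Context: $\overline{B}_r(0)$ is the closed disc of radius $r$ centered at $0$; $\overline{\mathbb C}_+=\{\operatorname{Im}z\ge0\}$; $\partial D_r$ is the boundary of the half-disc $D_r$ (the segment $[-r,r]$ together with the upper semicircle of radius $r$). *)

From Stdlib Require Import Reals List.
From Coquelicot Require Import Coquelicot.
Open Scope R_scope.

Definition C_open (U : C -> Prop) : Prop :=
  forall z, U z -> exists eps, 0 < eps /\ forall w, Cmod (w - z)%C < eps -> U w.

Definition analytic_on (U : C -> Prop) (f : C -> C) : Prop :=
  forall z0, U z0 -> exists rho, 0 < rho /\ exists a : nat -> C,
    forall z, Cmod (z - z0)%C < rho ->
      is_series (V := C_NormedModule) (fun n => (a n * (z - z0) ^ n)%C) (f z).

Definition half_disc (r : R) (z : C) : Prop := Cmod z <= r /\ 0 <= Im z.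

Definition half_disc_boundary (r : R) (z : C) : Prop :=
  (Im z = 0 /\ - r <= Re z <= r) \/ (Cmod z = r /\ 0 <= Im z).

Definition analytic_near_half_disc (r : R) (f : C -> C) : Prop :=
  exists U, C_open U /\ (forall z, half_disc r z -> U z) /\ analytic_on U f.

Definition zero_order (f : C -> C) (z0 : C) (m : nat) : Prop :=
  exists rho, 0 < rho /\ exists g : C -> C,
    analytic_on (fun w => Cmod (w - z0)%C < rho) g /\ g z0 <> 0%C /\
    forall z, Cmod (z - z0)%C < rho -> f z = ((z - z0) ^ m * g z)%C.

Definition strip_region (a eta Y : R) (z : C) : Prop :=
  eta <= Im z <= Y /\ Cmod z <= a.

Definition sup_boundary (r : R) (f : C -> C) : R :=
  real (Lub_Rbar (fun x => exists z, half_disc_boundary r z /\ x = Cmod (f z))).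

Definition Lambda (r alpha beta eta Y : R) : R :=
  (1 + (4 * beta * eta) / ((alpha + beta) ^ 2) * / r)
  / (1 + (4 * Y) / ((1 - alpha) ^ 2) * / r).

From Stdlib Require Import Reals List Lra Lia Arith Classical ClassicalEpsilon.
From Coquelicot Require Import Coquelicot.
Open Scope R_scope.

(* Let c = i beta r and let l list distinct zeros a of f in the
   strip region with multiplicities m. Form the auxiliary function
     G = f * prod_a [ (z - conj a)(r^2 - conj a z) / ((z - a)(r^2 - a z)) ]^m,
   whose singularities at the zeros of f are removable. Each factor has
   modulus 1 on the boundary of the half-disc D_r (the real segment and the
   upper semicircle), so the maximum modulus principle on D_r gives
   |G(c)| <= sup_{boundary} |f|, while an elementary estimate shows that each
   factor has squared modulus at least Lambda(r) at c. Hence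
   Lambda(r)^N <= (sup |f| / |f(c)|)^2, and taking logarithms gives the bound. *)

Notation CN := C_NormedModule.
Add Field C_field_inst : C_field_theory.

Lemma Cmod_is_series_le (a : nat -> C) (l : C) (b : nat -> R) (lb : R) :
  is_series (V:=CN) a l -> is_series b lb -> (forall n, Cmod (a n) <= b n) -> Cmod l <= lb.
Proof.
  intros Ha Hb H.
  assert (Hn : is_lim_seq (fun n => Cmod (sum_n (G:=CN) a n)) (Cmod l)).
  { eapply filterlim_comp; [exact Ha|exact (filterlim_norm (K:=C_AbsRing) (V:=CN) l)]. }
  apply (is_lim_seq_le (fun n => Cmod (sum_n (G:=CN) a n)) (sum_n b) (Cmod l) lb); [|exact Hn|exact Hb].
  intros n. eapply Rle_trans; [apply (norm_sum_n_m (K:=C_AbsRing) (V:=CN))|].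
  apply sum_n_m_le. exact H.
Qed.

Lemma series_terms_bounded (a : nat -> C) l :
  is_series (V:=CN) a l -> exists K, forall n, Cmod (a n) <= K.
Proof.
  intros H. destruct (filterlim_bounded (K:=C_AbsRing) (V:=CN) (sum_n a) (ex_intro _ l H)) as [M HM].
  assert (HM' : forall n, Cmod (sum_n (G:=CN) a n) <= M) by exact HM.
  exists (2 * M). intros [|n].
  - specialize (HM' O). rewrite sum_O in HM'. pose proof (Cmod_ge_0 (a O)). lra.
  - assert (E : a (S n) = (sum_n (G:=CN) a (S n) - sum_n (G:=CN) a n)%C).
    { rewrite sum_Sn. simpl. change (plus (sum_n a n) (a (S n))) with (sum_n (G:=CN) a n + a (S n))%C. ring. }
    rewrite E. unfold Cminus. eapply Rle_trans; [apply Cmod_triangle|].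
    rewrite Cmod_opp. pose proof (HM' n). pose proof (HM' (S n)). lra.
Qed.

Lemma is_series_C_unique (a : nat -> C) l1 l2 :
  is_series (V:=CN) a l1 -> is_series (V:=CN) a l2 -> l1 = l2.
Proof.
  intros H1 H2.
  exact (filterlim_locally_unique (K:=C_AbsRing) (V:=CN) (F:=eventually) _ _ _ H1 H2).
Qed.

Lemma is_series_C_zero : is_series (V:=CN) (fun _ : nat => RtoC 0) (RtoC 0).
Proof.
  unfold is_series. eapply filterlim_ext; [|apply (filterlim_const (F:=eventually) (U:=CN) (RtoC 0))].
  intros n. symmetry. exact (sum_n_m_const_zero (G:=CN) 0 n).
Qed.

(* Abel's lemma: a power series converging on the open disc of radius rho
   converges absolutely at every radius s < rho (its terms are bounded at
   radius (s + rho)/2, so they are dominated by a geometric series). *)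
Lemma power_series_abs_conv (a : nat -> C) (g : C -> C) z0 rho :
  (forall z, Cmod (z - z0)%C < rho -> is_series (V:=CN) (fun n => a n * (z - z0) ^ n)%C (g z)) ->
  forall s, 0 <= s < rho -> ex_series (fun n => Cmod (a n) * s ^ n).
Proof.
  intros H s Hs. set (t := (s + rho) / 2).
  assert (Ht : 0 < t /\ s < t /\ t < rho) by (unfold t; lra).
  assert (Hz : Cmod ((z0 + RtoC t) - z0)%C < rho).
  { replace ((z0 + RtoC t) - z0)%C with (RtoC t) by ring. rewrite Cmod_R, Rabs_pos_eq; lra. }
  destruct (series_terms_bounded _ _ (H _ Hz)) as [K HK].
  apply (ex_series_le (K:=R_AbsRing) (V:=R_CompleteNormedModule) _ (fun n => K * (s / t) ^ n)).
  - intros n. change (norm (Cmod (a n) * s ^ n)) with (Rabs (Cmod (a n) * s ^ n)).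
    rewrite Rabs_pos_eq by (apply Rmult_le_pos; [apply Cmod_ge_0| apply pow_le; lra]).
    specialize (HK n). replace ((z0 + RtoC t) - z0)%C with (RtoC t) in HK by ring.
    rewrite Cmod_mult, Cmod_pow, Cmod_R, Rabs_pos_eq in HK by lra.
    replace (s ^ n) with (t ^ n * (s / t) ^ n) by (rewrite <- Rpow_mult_distr; f_equal; field; lra).
    rewrite <- Rmult_assoc. apply Rmult_le_compat_r; [apply pow_le; apply Rdiv_le_0_compat; lra| exact HK].
  - apply (ex_series_scal (K:=R_AbsRing) (V:=R_NormedModule) K (fun n => (s / t) ^ n)).
    exists (/ (1 - s / t)). apply is_series_geom. rewrite Rabs_pos_eq.
    + apply Rmult_lt_reg_r with t; [lra|]. field_simplify; lra.
    + apply Rdiv_le_0_compat; lra.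
Qed.

Definition series_at (g : C -> C) (z0 : C) (rho : R) (a : nat -> C) : Prop :=
  0 < rho /\ (forall s, 0 <= s < rho -> ex_series (fun n => Cmod (a n) * s ^ n)) /\
  (forall z, Cmod (z - z0)%C < rho -> is_series (V:=CN) (fun n => a n * (z - z0) ^ n)%C (g z)).

Lemma series_at_of_analytic U g z0 :
  analytic_on U g -> U z0 -> exists rho a, series_at g z0 rho a.
Proof.
  intros H Hz. destruct (H z0 Hz) as [rho [Hr [a Ha]]]. exists rho, a.
  split; [auto|split; auto]. apply power_series_abs_conv with g z0. exact Ha.
Qed.

Lemma series_at_shrink g z0 rho a rho' :
  series_at g z0 rho a -> 0 < rho' <= rho -> series_at g z0 rho' a.
Proof.
  intros [H1 [H2 H3]] Hr. split; [lra|split].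
  - intros s Hs. apply H2. lra.
  - intros z Hz. apply H3. lra.
Qed.

Lemma series_at_ext g h z0 rho a :
  series_at g z0 rho a -> (forall z, Cmod (z - z0)%C < rho -> g z = h z) -> series_at h z0 rho a.
Proof.
  intros [H1 [H2 H3]] He. split; [auto|split; auto].
  intros z Hz. rewrite <- He by auto. auto.
Qed.

Lemma Cmod_sub_diag (z : C) : Cmod (z - z)%C = 0.
Proof. replace (z - z)%C with (RtoC 0) by ring. apply Cmod_0. Qed.

Lemma is_series_C_decr (u : nat -> C) l :
  is_series (V:=CN) (fun k => u (S k)) l -> is_series (V:=CN) u (l + u 0%nat)%C.
Proof.
  intros H. apply (is_series_decr_1 (K:=C_AbsRing) (V:=CN)).
  match goal with |- is_series _ ?m => replace m with l end; [exact H|].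
  assert (E : forall x y : C, x = (x + y + - y)%C) by (intros; ring). apply E.
Qed.

Lemma series_at_center g z0 rho a : series_at g z0 rho a -> g z0 = a 0%nat.
Proof.
  intros [H1 [_ H3]].
  assert (Hz : Cmod (z0 - z0)%C < rho) by (rewrite Cmod_sub_diag; lra).
  apply (is_series_C_unique _ _ _ (H3 z0 Hz)).
  replace (a 0%nat) with (RtoC 0 + a 0%nat * (z0 - z0) ^ 0)%C by (simpl; ring).
  apply is_series_C_decr.
  apply (is_series_ext (K:=C_AbsRing) (V:=CN)) with (fun _ : nat => RtoC 0).
  - intros n. replace (z0 - z0)%C with (RtoC 0) by ring. simpl. ring.
  - apply is_series_C_zero.
Qed.

Lemma ex_series_le_R (u v : nat -> R) : (forall n, 0 <= u n <= v n) -> ex_series v -> ex_series u.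
Proof.
  intros H Hv. apply (ex_series_le (K:=R_AbsRing) (V:=R_CompleteNormedModule) u v); auto.
  intros n. change (norm (u n)) with (Rabs (u n)). rewrite Rabs_pos_eq; apply H.
Qed.

Lemma ex_series_R_plus (u v : nat -> R) : ex_series u -> ex_series v -> ex_series (fun n => u n + v n).
Proof. intros. apply (ex_series_plus (K:=R_AbsRing) (V:=R_NormedModule)); auto. Qed.

Lemma ex_series_R_scal (k : R) (u : nat -> R) : ex_series u -> ex_series (fun n => k * u n).
Proof. intros. apply (ex_series_scal (K:=R_AbsRing) (V:=R_NormedModule)); auto. Qed.

Lemma is_series_C_scal (k : C) (u : nat -> C) l :
  is_series (V:=CN) u l -> is_series (V:=CN) (fun n => k * u n)%C (k * l)%C.
Proof. intros H. apply (is_series_scal (K:=C_AbsRing) (V:=CN) k u l H). Qed.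

Lemma is_series_C_plus (u v : nat -> C) lu lv :
  is_series (V:=CN) u lu -> is_series (V:=CN) v lv ->
  is_series (V:=CN) (fun n => u n + v n)%C (lu + lv)%C.
Proof. intros H1 H2. apply (is_series_plus (K:=C_AbsRing) (V:=CN) u v lu lv H1 H2). Qed.

Lemma is_series_C_ext (u v : nat -> C) l :
  (forall n, u n = v n) -> is_series (V:=CN) u l -> is_series (V:=CN) v l.
Proof. intros. apply (is_series_ext (K:=C_AbsRing) (V:=CN) u v l); auto. Qed.

Lemma series_at_scal g z0 rho a k :
  series_at g z0 rho a -> series_at (fun z => k * g z)%C z0 rho (fun n => k * a n)%C.
Proof.
  intros [H1 [H2 H3]]. split; [auto|split].
  - intros s Hs. apply ex_series_le_R with (fun n => Cmod k * (Cmod (a n) * s ^ n)).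
    + intros n. rewrite Cmod_mult. split; [|lra].
      apply Rmult_le_pos; [apply Rmult_le_pos; apply Cmod_ge_0|apply pow_le; lra].
    + apply ex_series_R_scal. auto.
  - intros z Hz. apply is_series_C_ext with (fun n => k * (a n * (z - z0) ^ n))%C.
    + intros n. ring.
    + apply is_series_C_scal. auto.
Qed.

Lemma series_at_plus g h z0 rho a b :
  series_at g z0 rho a -> series_at h z0 rho b ->
  series_at (fun z => g z + h z)%C z0 rho (fun n => a n + b n)%C.
Proof.
  intros [H1 [H2 H3]] [_ [H2' H3']]. split; [auto|split].
  - intros s Hs. apply ex_series_le_R with (fun n => Cmod (a n) * s ^ n + Cmod (b n) * s ^ n).
    + intros n. assert (0 <= s ^ n) by (apply pow_le; lra). split.
      * apply Rmult_le_pos; [apply Cmod_ge_0|auto].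
      * rewrite <- Rmult_plus_distr_r. apply Rmult_le_compat_r; auto. apply Cmod_triangle.
    + apply ex_series_R_plus; auto.
  - intros z Hz. apply is_series_C_ext with (fun n => a n * (z - z0) ^ n + b n * (z - z0) ^ n)%C.
    + intros n. ring.
    + apply is_series_C_plus; auto.
Qed.

Definition const_coef (c : C) (n : nat) : C := match n with O => c | S _ => RtoC 0 end.

Lemma series_at_const c z0 rho : 0 < rho -> series_at (fun _ => c) z0 rho (const_coef c).
Proof.
  intros Hr. split; [auto|split].
  - intros s Hs. apply ex_series_le_R with (fun n => Cmod c * (1/2) ^ n).
    + intros [|n]; simpl.
      * split; [apply Rmult_le_pos; [apply Cmod_ge_0|lra]|lra].
      * rewrite Cmod_0, Rmult_0_l. split; [lra|].
        apply Rmult_le_pos; [apply Cmod_ge_0|]. apply Rmult_le_pos; [lra|apply pow_le; lra].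
    + apply ex_series_R_scal. exists (/ (1 - 1/2)). apply is_series_geom. rewrite Rabs_pos_eq; lra.
  - intros z Hz. replace c with (RtoC 0 + const_coef c 0 * (z - z0) ^ 0)%C at 1 by (simpl; ring).
    apply is_series_C_decr.
    apply is_series_C_ext with (fun _ => RtoC 0). intros n. simpl. ring. apply is_series_C_zero.
Qed.

Definition aff_coef (p q z0 : C) (a : nat -> C) (n : nat) : C :=
  match n with
  | O => ((p * z0 + q) * a 0%nat)%C
  | S m => (p * a m + (p * z0 + q) * a (S m))%C
  end.

Lemma series_at_mul_aff g z0 rho a p q :
  series_at g z0 rho a -> series_at (fun z => (p * z + q) * g z)%C z0 rho (aff_coef p q z0 a).
Proof.
  intros [H1 [H2 H3]]. set (be := (p * z0 + q)%C). split; [auto|split].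
  - intros s Hs.
    apply ex_series_le_R with (fun n => Cmod be * (Cmod (a n) * s ^ n) +
        match n with O => 0 | S m => Cmod p * s * (Cmod (a m) * s ^ m) end).
    + intros n. assert (0 <= s ^ n) by (apply pow_le; lra). split.
      * apply Rmult_le_pos; [apply Cmod_ge_0|auto].
      * destruct n as [|m]; simpl.
        -- rewrite Cmod_mult. fold be. lra.
        -- eapply Rle_trans.
           ++ apply Rmult_le_compat_r; [apply Rmult_le_pos; [lra|apply pow_le; lra]|apply Cmod_triangle].
           ++ rewrite !Cmod_mult. fold be. nra.
    + apply ex_series_R_plus; [apply ex_series_R_scal; auto|].
      apply ex_series_incr_1. simpl. apply ex_series_R_scal. apply H2. auto.
  - intros z Hz.
    apply is_series_C_ext with (fun n => be * (a n * (z - z0) ^ n) +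
        match n with O => RtoC 0 | S m => (p * (z - z0)) * (a m * (z - z0) ^ m) end)%C.
    + intros [|m]; simpl; fold be; ring.
    + replace ((p * z + q) * g z)%C with (be * g z + ((p * (z - z0)) * g z + RtoC 0))%C
        by (unfold be; ring).
      apply is_series_C_plus; [apply is_series_C_scal; auto|].
      apply is_series_C_decr. apply is_series_C_scal. auto.
Qed.

Lemma series_at_tail g z0 rho a k s : series_at g z0 rho a -> 0 < s < rho ->
  exists Cc, 0 <= Cc /\ forall z, Cmod (z - z0)%C <= s ->
    Cmod (g z - sum_n (G:=CN) (fun n => a n * (z - z0) ^ n)%C k)%C <= Cc * Cmod (z - z0)%C ^ (S k).
Proof.
  intros [H1 [H2 H3]] Hs.
  assert (Hex : ex_series (fun n => Cmod (a n) * s ^ n)) by (apply H2; lra).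
  set (A := Series (fun n => Cmod (a n) * s ^ n)).
  assert (Hex' : ex_series (fun j => Cmod (a (S k + j)%nat) * s ^ (S k + j))).
  { apply (ex_series_incr_n (K:=R_AbsRing) (V:=R_NormedModule) (fun n => Cmod (a n) * s ^ n) (S k)).
    exact Hex. }
  set (T := Series (fun j => Cmod (a (S k + j)%nat) * s ^ (S k + j))).
  assert (HT : T <= A).
  { unfold A. rewrite (Series_incr_n _ (S k)) by (auto; lia). fold T. simpl.
    assert (0 <= sum_f_R0 (fun n => Cmod (a n) * s ^ n) k).
    { apply cond_pos_sum. intros n. apply Rmult_le_pos; [apply Cmod_ge_0|apply pow_le; lra]. }
    lra. }
  exists (A / s ^ S k). split.
  { apply Rdiv_le_0_compat; [|apply pow_lt; lra].
    apply Rle_trans with T; [|exact HT]. unfold T.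
    replace 0 with (Series (fun _ : nat => 0 * 1)) by (rewrite Series_scal_l; ring).
    apply Series_le; [|exact Hex'].
    intros n. rewrite Rmult_0_l. split; [lra|].
    apply Rmult_le_pos; [apply Cmod_ge_0|apply pow_le; lra]. }
  intros z Hz. set (w := (z - z0)%C).
  assert (Hw : Cmod w < rho) by (unfold w; lra).
  specialize (H3 z Hw). fold w in H3.
  set (Sk := sum_n (G:=CN) (fun n => a n * w ^ n)%C k).
  assert (Htail : is_series (V:=CN) (fun j => a (S k + j)%nat * w ^ (S k + j))%C (g z - Sk)%C).
  { apply (is_series_incr_n (K:=C_AbsRing) (V:=CN) (fun n => a n * w ^ n)%C (S k) (g z - Sk)%C); [lia|].
    match goal with |- is_series _ ?m => replace m with (g z) end; [exact H3|].
    change (@eq C (g z) (Cplus (Cminus (g z) Sk) Sk)). ring. }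
  assert (Hb : is_series (fun j => Cmod w ^ S k / s ^ S k * (Cmod (a (S k + j)%nat) * s ^ (S k + j)))
                 (Cmod w ^ S k / s ^ S k * T)).
  { apply (is_series_scal (K:=R_AbsRing) (V:=R_NormedModule)). apply Series_correct. exact Hex'. }
  assert (Hsk : 0 < s ^ S k) by (apply pow_lt; lra).
  assert (Hw0 : 0 <= Cmod w) by apply Cmod_ge_0.
  eapply Rle_trans; [apply (Cmod_is_series_le _ _ _ _ Htail Hb)|].
  - intros j. rewrite Cmod_mult, Cmod_pow.
    replace (Cmod w ^ S k / s ^ S k * (Cmod (a (S k + j)%nat) * s ^ (S k + j)))
      with (Cmod (a (S k + j)%nat) * (Cmod w ^ S k * s ^ j)) by (rewrite pow_add; field; lra).
    rewrite pow_add.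
    apply Rmult_le_compat_l; [apply Cmod_ge_0|]. apply Rmult_le_compat_l; [apply pow_le; auto|].
    apply pow_incr. split; [exact Hw0|exact Hz].
  - assert (0 <= Cmod w ^ S k) by (apply pow_le; apply Cmod_ge_0).
    replace (A / s ^ S k * Cmod w ^ S k) with (Cmod w ^ S k / s ^ S k * A) by (field; lra).
    apply Rmult_le_compat_l; auto. apply Rdiv_le_0_compat; lra.
Qed.

Lemma sum_n_leading (e : nat -> C) (w : C) k : (forall n, (n < k)%nat -> e n = RtoC 0) ->
  sum_n (G:=CN) (fun n => e n * w ^ n)%C k = (e k * w ^ k)%C.
Proof.
  intros H. destruct k as [|k]; [apply sum_O|].
  rewrite sum_Sn.
  assert (Hz : forall j, (j <= k)%nat -> sum_n (G:=CN) (fun n => e n * w ^ n)%C j = RtoC 0).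
  { induction j as [|j IHj]; intros Hj.
    - rewrite sum_O, H by lia. change (RtoC 0 * w ^ 0 = RtoC 0)%C. ring.
    - rewrite sum_Sn, IHj, (H (S j)) by lia. change (RtoC 0 + RtoC 0 * w ^ S j = RtoC 0)%C. ring. }
  rewrite Hz by lia. change (RtoC 0 + e (S k) * w ^ S k = e (S k) * w ^ S k)%C. ring.
Qed.

Lemma series_at_leading g z0 rho a k s : series_at g z0 rho a -> 0 < s < rho ->
  (forall n, (n < k)%nat -> a n = RtoC 0) ->
  exists Cc, 0 <= Cc /\ forall z, Cmod (z - z0)%C <= s ->
    Cmod (g z - a k * (z - z0) ^ k)%C <= Cc * Cmod (z - z0)%C ^ (S k).
Proof.
  intros Hg Hs Hlow. destruct (series_at_tail g z0 rho a k s Hg Hs) as [Cc [HCc HT]].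
  exists Cc. split; [exact HCc|]. intros z Hz. rewrite <- sum_n_leading by exact Hlow. auto.
Qed.

Lemma series_at_lipschitz g z0 rho a s : series_at g z0 rho a -> 0 < s < rho ->
  exists Cc, 0 <= Cc /\ forall z, Cmod (z - z0)%C <= s -> Cmod (g z - g z0)%C <= Cc * Cmod (z - z0)%C.
Proof.
  intros Hg Hs. destruct (series_at_leading g z0 rho a 0 s Hg Hs) as [Cc [HCc HT]]; [intros; lia|].
  exists Cc. split; [exact HCc|]. intros z Hz. specialize (HT z Hz).
  rewrite (series_at_center _ _ _ _ Hg). simpl in HT. rewrite Cmult_1_r, Rmult_1_r in HT. exact HT.
Qed.

Lemma Cmod_rev_tri (x y : C) : Rabs (Cmod x - Cmod y) <= Cmod (x - y)%C.
Proof.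
  assert (H1 : Cmod x <= Cmod y + Cmod (x - y)%C).
  { replace x with (y + (x - y))%C at 1 by ring. apply Cmod_triangle. }
  assert (H2 : Cmod y <= Cmod x + Cmod (x - y)%C).
  { replace y with (x + - (x - y))%C at 1 by ring. eapply Rle_trans; [apply Cmod_triangle|].
    rewrite Cmod_opp. lra. }
  apply Rabs_le. lra.
Qed.

Lemma series_at_lower_bound g z0 rho a : series_at g z0 rho a -> g z0 <> RtoC 0 ->
  exists d, 0 < d < rho /\ forall z, Cmod (z - z0)%C < d -> Cmod (g z0) / 2 <= Cmod (g z).
Proof.
  intros Hg Hg0. assert (Hrho : 0 < rho) by (destruct Hg; auto).
  destruct (series_at_lipschitz _ _ _ _ (rho / 2) Hg ltac:(lra)) as [Cc [HCc HL]].
  assert (Hm : 0 < Cmod (g z0)) by (apply Cmod_gt_0; auto).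
  set (d := Rmin (rho / 2) (Cmod (g z0) / (2 * (Cc + 1)))).
  assert (Hd1 : d <= rho / 2) by apply Rmin_l.
  assert (Hd2 : d <= Cmod (g z0) / (2 * (Cc + 1))) by apply Rmin_r.
  assert (Hd : 0 < d) by (apply Rmin_pos; [lra|apply Rdiv_lt_0_compat; lra]).
  exists d. split; [lra|]. intros z Hz.
  specialize (HL z ltac:(lra)). set (w := Cmod (z - z0)%C) in *.
  assert (Hw : 0 <= w) by apply Cmod_ge_0.
  assert (Hcw : (Cc + 1) * w <= Cmod (g z0) / 2).
  { replace (Cmod (g z0) / 2) with ((Cc + 1) * (Cmod (g z0) / (2 * (Cc + 1)))) by (field; lra).
    apply Rmult_le_compat_l; lra. }
  pose proof (Cmod_rev_tri (g z) (g z0)) as Htri. apply Rabs_le_between in Htri. nra.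
Qed.

Lemma series_at_nonzero_near g z0 rho a : series_at g z0 rho a -> g z0 <> RtoC 0 ->
  exists d, 0 < d < rho /\ forall z, Cmod (z - z0)%C < d -> g z <> RtoC 0.
Proof.
  intros Hg Hg0. destruct (series_at_lower_bound g z0 rho a Hg Hg0) as [d [Hd Hlow]].
  exists d. split; [exact Hd|]. intros z Hz E. specialize (Hlow z Hz). rewrite E, Cmod_0 in Hlow.
  assert (0 < Cmod (g z0)) by (apply Cmod_gt_0; auto). lra.
Qed.

Lemma series_at_zero_coefs g z0 rho e : series_at g z0 rho e -> (forall n, e n = RtoC 0) ->
  forall z, Cmod (z - z0)%C < rho -> g z = RtoC 0.
Proof.
  intros [_ [_ H3]] He z Hz.
  apply (is_series_C_unique _ _ _ (H3 z Hz)). apply is_series_C_ext with (fun _ => RtoC 0).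
  - intros n. rewrite He. ring.
  - apply is_series_C_zero.
Qed.

Definition prod_affine (L : list (C * C)) (z : C) : C :=
  fold_right (fun pq acc => ((fst pq * z + snd pq) * acc)%C) (RtoC 1) L.

Lemma series_at_prod_affine L g z0 rho a :
  series_at g z0 rho a -> exists a', series_at (fun z => prod_affine L z * g z)%C z0 rho a'.
Proof.
  revert a. induction L as [|[p q] L IH]; intros a H.
  - exists a. apply series_at_ext with g; auto. intros z _. simpl. ring.
  - destruct (IH a H) as [a' H'].
    exists (aff_coef p q z0 a'). apply series_at_ext with (fun z => (p * z + q) * (prod_affine L z * g z))%C.
    + apply series_at_mul_aff. auto.
    + intros z _. simpl. ring.
Qed.

Lemma series_at_poly L z0 rho : 0 < rho -> exists a, series_at (prod_affine L) z0 rho a.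
Proof.
  intros Hr. destruct (series_at_prod_affine L _ _ _ _ (series_at_const (RtoC 1) z0 rho Hr)) as [a Ha].
  exists a. apply series_at_ext with (fun z => prod_affine L z * RtoC 1)%C; auto. intros; ring.
Qed.

Lemma C_eq (x y : C) : Re x = Re y -> Im x = Im y -> x = y.
Proof. destruct x, y. simpl. intros; subst; auto. Qed.

Lemma Cpow_cis th n : (((cos th, sin th) : C) ^ n)%C = ((cos (INR n * th), sin (INR n * th)) : C).
Proof.
  induction n as [|n IHn].
  - simpl. rewrite Rmult_0_l, cos_0, sin_0. reflexivity.
  - rewrite Cpow_S, IHn, S_INR.
    replace ((INR n + 1) * th) with (th + INR n * th) by ring.
    rewrite cos_plus, sin_plus. unfold Cmult. simpl. f_equal; ring.
Qed.

Lemma polar (z : C) : z <> RtoC 0 -> exists th, z = ((Cmod z * cos th, Cmod z * sin th) : C).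
Proof.
  intros Hz. assert (Hm : 0 < Cmod z) by (apply Cmod_gt_0; auto).
  set (x := Re z / Cmod z).
  assert (H2 := Cmod2_alt z).
  assert (Hx : -1 <= x <= 1).
  { unfold x. assert (H := re_le_Cmod z). apply Rabs_le_between in H.
    split; apply Rmult_le_reg_r with (Cmod z); try lra; field_simplify; lra. }
  assert (Hs : sqrt (1 - x²) = Rabs (Im z) / Cmod z).
  { apply sqrt_lem_1.
    - unfold x. rewrite Rsqr_div' by lra. unfold Rsqr.
      replace (1 - Re z * Re z / (Cmod z * Cmod z))
        with ((Cmod z * Cmod z - Re z * Re z) / (Cmod z * Cmod z)) by (field; lra).
      apply Rdiv_le_0_compat; nra.
    - apply Rdiv_le_0_compat; [apply Rabs_pos|lra].
    - unfold x. rewrite Rsqr_div' by lra. unfold Rsqr.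
      replace (Rabs (Im z) / Cmod z * (Rabs (Im z) / Cmod z))
        with ((Rabs (Im z) * Rabs (Im z)) / (Cmod z * Cmod z)) by (field; lra).
      rewrite <- Rabs_mult, Rabs_pos_eq by nra. field_simplify; [|lra|lra]. f_equal. lra. }
  destruct (Rle_or_lt 0 (Im z)) as [Hi|Hi].
  - exists (acos x). apply C_eq; simpl.
    + rewrite cos_acos by auto. unfold x. field. lra.
    + rewrite sin_acos, Hs by auto. rewrite Rabs_pos_eq by auto. field. lra.
  - exists (- acos x). apply C_eq; simpl.
    + rewrite cos_neg, cos_acos by auto. unfold x. field. lra.
    + rewrite sin_neg, sin_acos, Hs by auto. rewrite Rabs_left by auto. field. lra.
Qed.

Lemma C_root (z : C) (k : nat) : (1 <= k)%nat -> exists u : C, (u ^ k)%C = z.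
Proof.
  intros Hk. destruct (Ceq_dec z (RtoC 0)) as [->|Hz].
  - exists (RtoC 0). destruct k; [lia|]. rewrite Cpow_S. apply Cmult_0_l.
  - destruct (polar z Hz) as [th Hth].
    assert (Hm : 0 < Cmod z) by (apply Cmod_gt_0; auto).
    assert (HkR : 0 < INR k) by (apply lt_0_INR; lia).
    exists (RtoC (Rpower (Cmod z) (/ INR k)) * ((cos (th / INR k), sin (th / INR k)) : C))%C.
    rewrite Cpow_mult_l, Cpow_cis, <- RtoC_pow.
    rewrite <- Rpower_pow by (unfold Rpower; apply exp_pos).
    rewrite Rpower_mult. replace (/ INR k * INR k) with 1 by (field; lra).
    rewrite Rpower_1 by auto. replace (INR k * (th / INR k)) with th by (field; lra).
    rewrite Hth at 2. apply C_eq; simpl; ring.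
Qed.

Lemma exists_small_pos (a b c : R) : 0 < a -> 0 < b -> 0 < c ->
  exists t, 0 < t /\ t < a /\ t < b /\ t < c.
Proof.
  intros Ha Hb Hc. exists (Rmin a (Rmin b c) / 2).
  pose proof (Rmin_l a (Rmin b c)). pose proof (Rmin_r a (Rmin b c)).
  pose proof (Rmin_l b c). pose proof (Rmin_r b c).
  assert (0 < Rmin a (Rmin b c)) by (repeat apply Rmin_pos; auto). lra.
Qed.

(* Core of the maximum modulus principle: if g(p + w) = c + b w^k + O(|w|^(k+1))
   with c, b nonzero and k >= 1, then |g| exceeds |c| arbitrarily close to p;
   move a small distance t along a direction u with b u^k = c. *)
Lemma expansion_not_local_max (g : C -> C) (p c b : C) (k : nat) (d0 K : R) :
  c <> RtoC 0 -> b <> RtoC 0 -> (1 <= k)%nat -> 0 < d0 -> 0 <= K ->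
  (forall w, Cmod w <= d0 -> Cmod (g (p + w) - c - b * w ^ k)%C <= K * Cmod w ^ S k) ->
  forall delta, 0 < delta -> exists z, Cmod (z - p)%C < delta /\ Cmod c < Cmod (g z).
Proof.
  intros Hc Hb Hk Hd0 HK Hexp delta Hdelta.
  destruct (C_root (c / b) k Hk) as [u Hu].
  assert (Hu0 : u <> RtoC 0).
  { intros ->. destruct k as [|k]; [lia|]. rewrite Cpow_S, Cmult_0_l in Hu.
    apply Hc. replace c with (c / b * b)%C by (field; auto). rewrite <- Hu. ring. }
  set (m := Cmod u). assert (Hm : 0 < m) by (apply Cmod_gt_0; auto).
  assert (Hcm : 0 < Cmod c) by (apply Cmod_gt_0; auto).
  set (Km := K * m ^ S k). assert (HKm : 0 <= Km) by (apply Rmult_le_pos; [lra|apply pow_le; lra]).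
  destruct (exists_small_pos (d0 / m) (delta / m) (Cmod c / (Km + 1))) as [t [Ht0 [Ht1 [Ht2 Ht3]]]];
    try (apply Rdiv_lt_0_compat; lra).
  apply (Rmult_lt_compat_r m) in Ht1; [|lra]. apply (Rmult_lt_compat_r m) in Ht2; [|lra].
  apply (Rmult_lt_compat_r (Km + 1)) in Ht3; [|lra].
  replace (d0 / m * m) with d0 in Ht1 by (field; lra).
  replace (delta / m * m) with delta in Ht2 by (field; lra).
  replace (Cmod c / (Km + 1) * (Km + 1)) with (Cmod c) in Ht3 by (field; lra).
  set (w := (RtoC t * u)%C).
  assert (Hw : Cmod w = t * m) by (unfold w, m; rewrite Cmod_mult, Cmod_R, Rabs_pos_eq; lra).
  exists (p + w)%C. split; [replace (p + w - p)%C with w by ring; lra|].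
  specialize (Hexp w ltac:(lra)). rewrite Hw in Hexp.
  assert (Hbw : (b * w ^ k)%C = (RtoC (t ^ k) * c)%C).
  { unfold w. rewrite Cpow_mult_l, Hu, <- RtoC_pow. field. auto. }
  rewrite Hbw in Hexp.
  assert (Htk : 0 < t ^ k) by (apply pow_lt; lra).
  assert (Hgrow : Cmod c * (1 + t ^ k) <= Cmod (g (p + w)%C) + K * (t * m) ^ S k).
  { replace (Cmod c * (1 + t ^ k)) with (Cmod ((RtoC 1 + RtoC (t ^ k)) * c)%C)
      by (rewrite Cmod_mult, <- RtoC_plus, Cmod_R, Rabs_pos_eq; lra).
    replace ((RtoC 1 + RtoC (t ^ k)) * c)%C
      with (g (p + w) + - (g (p + w) - c - RtoC (t ^ k) * c))%C by ring.
    eapply Rle_trans; [apply Cmod_triangle|]. rewrite Cmod_opp. lra. }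
  assert (Hsmall : K * (t * m) ^ S k < Cmod c * t ^ k).
  { replace (K * (t * m) ^ S k) with ((Km * t) * t ^ k) by (unfold Km; rewrite Rpow_mult_distr; simpl; ring).
    apply Rmult_lt_compat_r; nra. }
  nra.
Qed.

(* Analytic functions and their products with
   rational functions that are regular at z0 are of this form. *)
Definition quotient_at (G : C -> C) (z0 : C) : Prop :=
  exists rho F P a b, series_at F z0 rho a /\ series_at P z0 rho b /\
  (forall z, Cmod (z - z0)%C < rho -> P z <> RtoC 0 /\ G z = (F z / P z)%C).

Lemma Cmod_div_le (x y : C) (m : R) : 0 < m -> m <= Cmod y -> Cmod (x / y)%C <= Cmod x / m.
Proof.
  intros Hm Hy. assert (y <> RtoC 0) by (intro E; rewrite E, Cmod_0 in Hy; lra).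
  rewrite Cmod_div by auto. apply Rmult_le_compat_l; [apply Cmod_ge_0|].
  apply Rinv_le_contravar; lra.
Qed.

Lemma quotient_at_lipschitz G z0 : quotient_at G z0 -> exists d L, 0 < d /\ 0 <= L /\
  forall z, Cmod (z - z0)%C < d -> Cmod (G z - G z0)%C <= L * Cmod (z - z0)%C.
Proof.
  intros [rho [F [P [a [b [HF [HP HG]]]]]]].
  assert (Hrho : 0 < rho) by (destruct HF; auto).
  destruct (HG z0) as [Hb0 HG0]; [rewrite Cmod_sub_diag; auto|].
  destruct (series_at_lipschitz _ _ _ _ (rho / 2) HF ltac:(lra)) as [C1 [HC1 HL1]].
  destruct (series_at_lipschitz _ _ _ _ (rho / 2) HP ltac:(lra)) as [C2 [HC2 HL2]].
  destruct (series_at_lower_bound _ _ _ _ HP Hb0) as [d1 [Hd1 Hlow]].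
  set (a0 := F z0) in *. set (b0 := P z0) in *.
  assert (Hbm : 0 < Cmod b0) by (apply Cmod_gt_0; auto).
  set (L := 2 * (C1 * Cmod b0 + Cmod a0 * C2) / Cmod b0 ^ 2).
  exists (Rmin (rho / 2) d1), L.
  split; [apply Rmin_pos; lra|].
  split; [unfold L; apply Rdiv_le_0_compat; [|apply pow_lt; lra]; pose proof (Cmod_ge_0 a0); nra|].
  intros z Hz.
  assert (Hz1 : Cmod (z - z0)%C <= rho / 2) by (pose proof (Rmin_l (rho / 2) d1); lra).
  assert (Hz2 : Cmod (z - z0)%C < d1) by (pose proof (Rmin_r (rho / 2) d1); lra).
  specialize (HL1 z Hz1). specialize (HL2 z Hz1). specialize (Hlow z Hz2).
  destruct (HG z) as [Hpz HGz]; [lra|].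
  rewrite HGz, HG0. set (w := Cmod (z - z0)%C) in *.
  replace (F z / P z - a0 / b0)%C with (((F z - a0) * b0 + - a0 * (P z - b0)) / (P z * b0))%C
    by (field; auto).
  eapply Rle_trans.
  { apply (Cmod_div_le _ _ (Cmod b0 / 2 * Cmod b0)); [nra|].
    rewrite Cmod_mult. apply Rmult_le_compat_r; lra. }
  eapply Rle_trans.
  { apply Rmult_le_compat_r; [apply Rlt_le, Rinv_0_lt_compat; nra|].
    eapply Rle_trans; [apply Cmod_triangle|]. rewrite !Cmod_mult, Cmod_opp.
    apply Rplus_le_compat; [apply Rmult_le_compat_r; [lra|exact HL1]|].
    apply Rmult_le_compat_l; [apply Cmod_ge_0|exact HL2]. }
  unfold L. right. field. lra.
Qed.

Lemma quotient_at_continuous G z0 : quotient_at G z0 -> forall eps, 0 < eps -> exists d, 0 < d /\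
  forall z, Cmod (z - z0)%C < d -> Cmod (G z - G z0)%C < eps.
Proof.
  intros HQ eps He. destruct (quotient_at_lipschitz _ _ HQ) as [d [L [Hd [HL0 Hlip]]]].
  exists (Rmin d (eps / (L + 1))). split; [apply Rmin_pos; auto; apply Rdiv_lt_0_compat; lra|].
  intros z Hz. assert (Hz1 : Cmod (z - z0)%C < d) by (pose proof (Rmin_l d (eps / (L + 1))); lra).
  assert (Hz2 : Cmod (z - z0)%C < eps / (L + 1)) by (pose proof (Rmin_r d (eps / (L + 1))); lra).
  specialize (Hlip z Hz1). assert (0 <= Cmod (z - z0)%C) by apply Cmod_ge_0.
  apply (Rmult_lt_compat_r (L + 1)) in Hz2; [|lra].
  replace (eps / (L + 1) * (L + 1)) with eps in Hz2 by (field; lra). nra.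
Qed.

Lemma quotient_expansion F P p rho a b k :
  series_at F p rho a -> series_at P p rho b -> P p <> RtoC 0 ->
  (forall n, (n < k)%nat -> a n = (F p / P p * b n)%C) ->
  exists d0 K, 0 < d0 < rho /\ 0 <= K /\ forall w, Cmod w <= d0 ->
    Cmod (F (p + w) / P (p + w) - F p / P p
          - ((a k - F p / P p * b k) / P p) * w ^ k)%C <= K * Cmod w ^ S k.
Proof.
  intros HF HP Hp0 Hlow. assert (Hrho : 0 < rho) by (destruct HF; auto).
  set (q := (F p / P p)%C) in *.
  assert (HH := series_at_plus _ _ _ _ _ _ HF (series_at_scal _ _ _ _ (- q)%C HP)). simpl in HH.
  destruct (series_at_leading _ _ _ _ k (rho / 2) HH ltac:(lra)) as [C1 [HC1 HT1]].
  { intros n Hn. rewrite Hlow by exact Hn. ring. }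
  destruct (series_at_lipschitz _ _ _ _ (rho / 2) HP ltac:(lra)) as [C2 [HC2 HL2]].
  destruct (series_at_lower_bound _ _ _ _ HP Hp0) as [d1 [Hd1 HPlow]].
  set (d0p := P p) in *. set (ek := (a k + - q * b k)%C).
  assert (Hdm : 0 < Cmod d0p) by (apply Cmod_gt_0; auto).
  set (K := 2 * C1 / Cmod d0p + 2 * Cmod ek * C2 / Cmod d0p ^ 2).
  exists (Rmin (rho / 2) (d1 / 2)), K.
  split; [split; [apply Rmin_pos; lra|pose proof (Rmin_l (rho / 2) (d1 / 2)); lra]|].
  split; [unfold K; pose proof (Cmod_ge_0 ek); apply Rplus_le_le_0_compat;
          apply Rdiv_le_0_compat; try nra; apply pow_lt; lra|].
  intros w Hw. set (z := (p + w)%C).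
  assert (Hzw : (z - p)%C = w) by (unfold z; ring).
  assert (Hw1 : Cmod (z - p)%C <= rho / 2) by (rewrite Hzw; pose proof (Rmin_l (rho / 2) (d1 / 2)); lra).
  assert (Hw2 : Cmod (z - p)%C < d1).
  { rewrite Hzw. pose proof (Rmin_r (rho / 2) (d1 / 2)). lra. }
  specialize (HT1 z Hw1). specialize (HL2 z Hw1). specialize (HPlow z Hw2).
  rewrite Hzw in HT1, HL2. fold ek in HT1.
  assert (HPz : P z <> RtoC 0) by (intro E; rewrite E, Cmod_0 in HPlow; lra).
  set (W := Cmod w) in *. assert (HW : 0 <= W) by apply Cmod_ge_0.
  replace ((a k - q * b k) / d0p)%C with (ek / d0p)%C by (unfold ek; field; auto).
  replace (F z / P z - q - ek / d0p * w ^ k)%C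
    with ((F z + - q * P z - ek * w ^ k) / P z + (ek * w ^ k) * (d0p - P z) / (P z * d0p))%C
    by (unfold q, d0p; field; split; auto).
  eapply Rle_trans; [apply Cmod_triangle|].
  assert (HX1 : Cmod ((F z + - q * P z - ek * w ^ k) / P z)%C <= 2 * C1 / Cmod d0p * W ^ S k).
  { eapply Rle_trans; [apply (Cmod_div_le _ _ (Cmod d0p / 2)); lra|].
    replace (2 * C1 / Cmod d0p * W ^ S k) with (C1 * W ^ S k / (Cmod d0p / 2)) by (field; lra).
    apply Rmult_le_compat_r; [apply Rlt_le, Rinv_0_lt_compat; lra|exact HT1]. }
  assert (HX2 : Cmod ((ek * w ^ k) * (d0p - P z) / (P z * d0p))%C
                <= 2 * Cmod ek * C2 / Cmod d0p ^ 2 * W ^ S k).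
  { eapply Rle_trans.
    { apply (Cmod_div_le _ _ (Cmod d0p / 2 * Cmod d0p)); [nra|].
      rewrite Cmod_mult. apply Rmult_le_compat_r; lra. }
    rewrite !Cmod_mult, Cmod_pow. fold W.
    replace (Cmod (d0p - P z)) with (Cmod (P z - d0p)) by (rewrite <- Cmod_opp; f_equal; ring).
    replace (2 * Cmod ek * C2 / Cmod d0p ^ 2 * W ^ S k)
      with (Cmod ek * W ^ k * (C2 * W) / (Cmod d0p / 2 * Cmod d0p)) by (simpl; field; lra).
    apply Rmult_le_compat_r; [apply Rlt_le, Rinv_0_lt_compat; nra|].
    apply Rmult_le_compat_l; [apply Rmult_le_pos; [apply Cmod_ge_0|apply pow_le; lra]|exact HL2]. }
  unfold K. lra.
Qed.

Lemma min_nat (P : nat -> Prop) n : P n -> exists k, P k /\ forall j, (j < k)%nat -> ~ P j.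
Proof.
  induction n as [n IH] using lt_wf_ind. intros Hn.
  destruct (classic (exists j, (j < n)%nat /\ P j)) as [[j [Hj Pj]]|Hno].
  - apply (IH j Hj Pj).
  - exists n. split; auto. intros j Hj Pj. apply Hno. eauto.
Qed.

(* Either F = q P identically (G is constant), or the first
   degree k where the coefficients of F and q P differ gives an expansion
   contradicting maximality. *)
Lemma quotient_at_local_max G z0 delta : quotient_at G z0 -> 0 < delta ->
  (forall z, Cmod (z - z0)%C < delta -> Cmod (G z) <= Cmod (G z0)) ->
  exists d', 0 < d' /\ forall z, Cmod (z - z0)%C < d' -> Cmod (G z) = Cmod (G z0).
Proof.
  intros [rho [F [P [a [b [HF [HP HG]]]]]]] Hd Hmax.
  assert (Hrho : 0 < rho) by (destruct HF; auto).
  destruct (HG z0) as [Hp0 HG0]; [rewrite Cmod_sub_diag; lra|].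
  set (q := (F z0 / P z0)%C) in *.
  destruct (Ceq_dec q (RtoC 0)) as [Hq0|Hq0].
  { exists delta. split; auto. intros z Hz. apply Rle_antisym; [auto|].
    rewrite HG0, Hq0, Cmod_0. apply Cmod_ge_0. }
  destruct (classic (exists n, a n <> (q * b n)%C)) as [[n0 Hn0]|Hall].
  2:{ exists rho. split; auto. intros z Hz. rewrite HG0. f_equal.
      destruct (HG z Hz) as [HPz ->].
      assert (E : (F z + - q * P z)%C = RtoC 0).
      { apply (series_at_zero_coefs _ _ _ _ (series_at_plus _ _ _ _ _ _ HF (series_at_scal _ _ _ _ (- q)%C HP)));
          [|exact Hz].
        intros n. simpl. destruct (Ceq_dec (a n) (q * b n)%C) as [->|Hne]; [ring|].
        exfalso; apply Hall; eauto. }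
      apply (f_equal (fun v => v / P z + q)%C) in E.
      replace (RtoC 0 / P z + q)%C with q in E by (field; auto). rewrite <- E. field. auto. }
  destruct (min_nat (fun n => a n <> (q * b n)%C) n0 Hn0) as [k [Hek Hmin]].
  assert (Hlow : forall n, (n < k)%nat -> a n = (q * b n)%C).
  { intros n Hn. destruct (Ceq_dec (a n) (q * b n)%C); auto. exfalso. apply (Hmin n Hn); auto. }
  assert (Hk : (1 <= k)%nat).
  { destruct k as [|k]; [|lia]. exfalso. apply Hek.
    rewrite <- (series_at_center _ _ _ _ HF), <- (series_at_center _ _ _ _ HP). unfold q. field. auto. }
  destruct (quotient_expansion F P z0 rho a b k HF HP Hp0 Hlow) as [d0 [K [Hd0 [HK Hexp]]]].
  fold q in Hexp.
  assert (Hlead : ((a k - q * b k) / P z0)%C <> RtoC 0).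
  { intro E. apply Hek.
    apply (f_equal (fun v => v * P z0 + q * b k)%C) in E.
    replace ((a k - q * b k) / P z0 * P z0 + q * b k)%C with (a k) in E by (field; auto).
    rewrite E. ring. }
  assert (HexpG : forall w, Cmod w <= d0 ->
            Cmod (G (z0 + w) - q - (a k - q * b k) / P z0 * w ^ k)%C <= K * Cmod w ^ S k).
  { intros w Hw. destruct (HG (z0 + w)%C) as [_ ->]; [replace (z0 + w - z0)%C with w by ring; lra|].
    apply Hexp. exact Hw. }
  destruct (expansion_not_local_max G z0 q _ k d0 K Hq0 Hlead Hk ltac:(lra) HK HexpG (Rmin delta rho))
    as [z [Hz Hbig]]; [apply Rmin_pos; lra|].
  rewrite <- HG0 in Hbig. pose proof (Rmin_l delta rho). specialize (Hmax z ltac:(lra)). lra.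
Qed.

Lemma Cmod_le_sum (z : C) : Cmod z <= Rabs (Re z) + Rabs (Im z).
Proof.
  assert (H := Cmod2_alt z). assert (H0 := Cmod_ge_0 z).
  assert (Ha := Rabs_pos (Re z)). assert (Hb := Rabs_pos (Im z)).
  rewrite <- (pow2_abs (Re z)), <- (pow2_abs (Im z)) in H.
  destruct (Rle_or_lt (Cmod z) (Rabs (Re z) + Rabs (Im z))); auto. nra.
Qed.

Lemma Im_le_Cmod (z : C) : Rabs (Im z) <= Cmod z.
Proof.
  assert (H' := Cmod2_alt z). assert (0 <= Cmod z) by apply Cmod_ge_0.
  destruct (Rle_or_lt (Rabs (Im z)) (Cmod z)); auto. rewrite <- (pow2_abs (Im z)) in H'.
  assert (0 <= Re z ^ 2) by (apply pow2_ge_0). nra.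
Qed.

Lemma half_disc_complement_open r x : ~ half_disc r x ->
  exists e, 0 < e /\ forall w, Rabs (Re w - Re x) < e -> Rabs (Im w - Im x) < e -> ~ half_disc r w.
Proof.
  intros Hx. apply not_and_or in Hx. destruct Hx as [Hx|Hx]; apply Rnot_le_lt in Hx.
  - exists ((Cmod x - r) / 2). split; [lra|]. intros w H1 H2 [Hw _].
    assert (Cmod (x - w)%C < Cmod x - r).
    { eapply Rle_lt_trans; [apply Cmod_le_sum|].
      rewrite Rabs_minus_sym in H1, H2. unfold Cminus. rewrite re_plus, im_plus, re_opp, im_opp.
      unfold Rminus in H1, H2. lra. }
    assert (Cmod x <= Cmod w + Cmod (x - w)%C).
    { replace x with (w + (x - w))%C at 1 by ring. apply Cmod_triangle. }
    lra.
  - exists (- Im x). split; [lra|]. intros w _ H2 [_ Hw]. apply Rabs_def2 in H2. lra.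
Qed.

Lemma list_max {T} (l : list T) (g : T -> R) (x0 : T) :
  In x0 l -> exists x, In x l /\ forall y, In y l -> g y <= g x.
Proof.
  revert x0. induction l as [|h l IH]; intros x0 Hin; [inversion Hin|].
  destruct l as [|h2 l2].
  - exists h. split; [left; auto|]. intros y [<-|[]]. lra.
  - destruct (IH h2 (or_introl eq_refl)) as [x [Hx Hmx]].
    destruct (Rle_or_lt (g h) (g x)).
    + exists x. split; [right; auto|]. intros y [<-|Hy]; auto.
    + exists h. split; [left; auto|]. intros y [<-|Hy]; [lra|]. specialize (Hmx y Hy). lra.
Qed.

Definition Tn2_to_C (x : Compactness.Tn 2 R) : C := (fst x, fst (snd x)).

(* Extreme value theorem on the compact half-disc, via Coquelicot's finite
   subcover lemma [compactness_list] on the box [-r, r] x [0, r]: if no point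
   were maximal, each point would have a neighbourhood dominated by some value
   of phi, and the best of finitely many such values would dominate itself. *)
Lemma half_disc_attains_max (r : R) (phi : C -> R) : 0 < r ->
  (forall z, half_disc r z -> forall eps, 0 < eps -> exists d, 0 < d /\
     forall w, half_disc r w -> Cmod (w - z)%C < d -> Rabs (phi w - phi z) < eps) ->
  exists p, half_disc r p /\ forall z, half_disc r z -> phi z <= phi p.
Proof.
  intros Hr Hc. apply NNPP. intros Hno.
  assert (Hbeat : forall p, half_disc r p -> exists z, half_disc r z /\ phi p < phi z).
  { intros p Hp. apply NNPP. intros Hn. apply Hno. exists p. split; auto.
    intros z Hz. apply Rnot_lt_le. intros Hlt. apply Hn; eauto. }
  assert (H0 : half_disc r (RtoC 0)) by (unfold half_disc; rewrite Cmod_0; simpl; lra).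
  set (close := fun (e : R) (w x : C) => Rabs (Re w - Re x) < e /\ Rabs (Im w - Im x) < e).
  assert (Hex : forall x : Compactness.Tn 2 R, exists dv : posreal * C,
     half_disc r (snd dv) /\
     (half_disc r (Tn2_to_C x) -> forall w, half_disc r w -> close (fst dv) w (Tn2_to_C x) ->
        phi w < phi (snd dv)) /\
     (~ half_disc r (Tn2_to_C x) -> forall w, close (fst dv) w (Tn2_to_C x) -> ~ half_disc r w)).
  { intros x. destruct (classic (half_disc r (Tn2_to_C x))) as [Hx|Hx].
    - destruct (Hbeat _ Hx) as [v [Hv Hlt]].
      destruct (Hc _ Hx (phi v - phi (Tn2_to_C x)) ltac:(lra)) as [d [Hd Hd']].
      exists (mkposreal (d / 2) ltac:(lra), v). simpl. split; auto. split; [|tauto].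
      intros _ w Hw [H1 H2]. assert (Cmod (w - Tn2_to_C x)%C < d).
      { eapply Rle_lt_trans; [apply Cmod_le_sum|].
        unfold Cminus. rewrite re_plus, im_plus, re_opp, im_opp. unfold Rminus in H1, H2. lra. }
      specialize (Hd' w Hw H). apply Rabs_def2 in Hd'. lra.
    - destruct (half_disc_complement_open r _ Hx) as [e [He He']].
      exists (mkposreal e He, RtoC 0). simpl. split; auto. split; [tauto|].
      intros _ w [H1 H2]. apply He'; auto. }
  destruct (choice _ Hex) as [dv Hdv].
  apply (compactness_list 2 (- r, (0, tt)) (r, (r, tt)) (fun x => fst (dv x))). intros [l Hl].
  destruct (Hl (0, (0, tt))) as [t0 [Ht0 _]]; [simpl; lra|].
  destruct (list_max l (fun x => phi (snd (dv x))) t0 Ht0) as [ts [Hts Hmax]].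
  destruct (Hdv ts) as [Hvin _].
  set (x := snd (dv ts)).
  destruct (Hl (Re x, (Im x, tt))) as [t [Ht [_ Hclose]]].
  { simpl. destruct Hvin as [Hv1 Hv2]. fold x in Hv1, Hv2.
    pose proof (re_le_Cmod x) as H1. pose proof (Im_le_Cmod x) as H2.
    apply Rabs_le_between in H1. apply Rabs_le_between in H2. lra. }
  destruct (Hdv t) as [_ [Hin Hout]].
  destruct t as [t1 [t2 []]]. simpl in Hclose. destruct Hclose as [C1 [C2 _]].
  assert (Hxt : close (fst (dv (t1, (t2, tt)))) x (Tn2_to_C (t1, (t2, tt)))) by (split; exact C1 || exact C2).
  destruct (classic (half_disc r (Tn2_to_C (t1, (t2, tt))))) as [Htin|Htin].
  - specialize (Hin Htin x Hvin Hxt). specialize (Hmax _ Ht). cbv beta in Hmax. fold x in Hmax. lra.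
  - apply (Hout Htin x); auto.
Qed.

Lemma real_induction_unit (P : R -> Prop) :
  P 0 ->
  (forall t, 0 < t <= 1 -> (forall s, 0 <= s < t -> P s) -> P t) ->
  (forall t, 0 <= t < 1 -> P t -> exists e, 0 < e /\ forall s, t <= s <= t + e -> P s) ->
  forall t, 0 <= t <= 1 -> P t.
Proof.
  intros H0 Hclosed Hopen.
  set (E := fun t => 0 <= t <= 1 /\ forall s, 0 <= s <= t -> P s).
  assert (HE0 : E 0) by (split; [lra|intros s Hs; replace s with 0 by lra; exact H0]).
  assert (HEb : bound E) by (exists 1; intros t [Ht _]; lra).
  destruct (completeness E HEb (ex_intro _ 0 HE0)) as [T [HTub HTlub]].
  assert (HT0 : 0 <= T) by (apply HTub; auto).
  assert (HT1 : T <= 1) by (apply HTlub; intros t [Ht _]; lra).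
  assert (Hbelow : forall s, 0 <= s < T -> P s).
  { intros s Hs. apply NNPP. intros Hn.
    assert (T <= s); [|lra]. apply HTlub. intros t [Ht Ht'].
    apply Rnot_lt_le. intros Hts. apply Hn, Ht'. lra. }
  assert (HPT : P T).
  { destruct (Rle_lt_or_eq_dec _ _ HT0) as [HTp|<-]; [apply Hclosed; auto; lra|exact H0]. }
  assert (HT : T = 1).
  { destruct (Rle_lt_or_eq_dec _ _ HT1) as [HTl|]; auto. exfalso.
    destruct (Hopen T ltac:(lra) HPT) as [e [He He']].
    assert (HE : E (Rmin 1 (T + e))).
    { split; [split; [assert (0 < Rmin 1 (T + e)) by (apply Rmin_pos; lra); lra|apply Rmin_l]|].
      intros s Hs. destruct (Rlt_or_le s T) as [Hst|Hst]; [apply Hbelow; lra|].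
      apply He'. pose proof (Rmin_r 1 (T + e)). lra. }
    specialize (HTub _ HE). assert (T < Rmin 1 (T + e)) by (apply Rmin_glb_lt; lra). lra. }
  intros t Ht. destruct (Rlt_or_le t T) as [|HtT]; [apply Hbelow; lra|].
  replace t with T by lra. exact HPT.
Qed.

Lemma Cmod_im0 (y : R) : Cmod ((0, y) : C) = Rabs y.
Proof. unfold Cmod. rewrite <- sqrt_Rsqr_abs. f_equal. simpl. unfold Rsqr. ring. Qed.

Definition vsegment (p : C) (t : R) : C := (Re p, (1 - t) * Im p).

Lemma vsegment_in_half_disc r p t : half_disc r p -> 0 <= t <= 1 ->
  half_disc r (vsegment p t) /\ Cmod (vsegment p t) <= Cmod p.
Proof.
  intros [Hp1 Hp2] Ht. assert (Hle : Cmod (vsegment p t) <= Cmod p).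
  { unfold vsegment, Cmod. apply sqrt_le_1_alt. destruct p as [x y]. simpl in *. nra. }
  split; [split; [lra|]|exact Hle]. unfold vsegment. simpl. nra.
Qed.

Lemma vsegment_dist p s t : 0 <= Im p -> Cmod (vsegment p s - vsegment p t)%C = Rabs (s - t) * Im p.
Proof.
  intros Hp. replace (vsegment p s - vsegment p t)%C with ((0, (t - s) * Im p) : C)
    by (apply C_eq; unfold vsegment; simpl; ring).
  rewrite Cmod_im0, Rabs_mult, (Rabs_pos_eq (Im p)) by lra. rewrite Rabs_minus_sym. reflexivity.
Qed.

Lemma half_disc_not_boundary r p : half_disc r p -> ~ half_disc_boundary r p -> 0 < Im p /\ Cmod p < r.
Proof.
  intros [Hp1 Hp2] Hb. split.
  - destruct (Rle_lt_or_eq_dec _ _ Hp2) as [|E]; auto. exfalso. apply Hb. left. split; auto.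
    apply Rabs_le_between. pose proof (re_le_Cmod p). lra.
  - destruct (Rle_lt_or_eq_dec _ _ Hp1) as [|E]; auto. exfalso. apply Hb. right. split; auto; lra.
Qed.

Lemma half_disc_interior_disc r z w : Cmod (w - z)%C < Rmin (r - Cmod z) (Im z) -> half_disc r w.
Proof.
  intros Hw. assert (H1 : Cmod (w - z)%C < r - Cmod z) by (eapply Rlt_le_trans; [exact Hw|apply Rmin_l]).
  assert (H2 : Cmod (w - z)%C < Im z) by (eapply Rlt_le_trans; [exact Hw|apply Rmin_r]).
  split.
  - assert (Cmod w <= Cmod z + Cmod (w - z)%C).
    { replace w with (z + (w - z))%C at 1 by ring. apply Cmod_triangle. }
    lra.
  - pose proof (Im_le_Cmod (w - z)%C) as H. apply Rabs_le_between in H.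
    replace (Im (w - z)%C) with (Im w - Im z) in H by (unfold Cminus; rewrite im_plus, im_opp; ring).
    lra.
Qed.

(* Starting from an interior maximum point p, the modulus stays
   maximal along the vertical segment from p down to the real axis. *)
Theorem maximum_principle_half_disc r G : 0 < r -> (forall z, half_disc r z -> quotient_at G z) ->
  exists q, half_disc_boundary r q /\ forall z, half_disc r z -> Cmod (G z) <= Cmod (G q).
Proof.
  intros Hr HQ.
  destruct (half_disc_attains_max r (fun z => Cmod (G z)) Hr) as [p [Hp Hmax]].
  { intros z Hz eps He. destruct (quotient_at_continuous _ _ (HQ z Hz) eps He) as [d [Hd Hd']].
    exists d. split; auto. intros w _ Hw. eapply Rle_lt_trans; [apply Cmod_rev_tri|]. auto. }
  destruct (classic (half_disc_boundary r p)) as [Hb|Hb]; [exists p; split; auto|].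
  destruct (half_disc_not_boundary r p Hp Hb) as [Hpi Hpr].
  set (g := vsegment p).
  assert (Hgin : forall t, 0 <= t <= 1 -> half_disc r (g t) /\ Cmod (g t) <= Cmod p)
    by (intros t Ht; apply vsegment_in_half_disc; auto).
  assert (Hgd : forall s t, Cmod (g s - g t)%C = Rabs (s - t) * Im p)
    by (intros s t; apply vsegment_dist; lra).
  assert (Hall : forall t, 0 <= t <= 1 -> Cmod (G (g t)) = Cmod (G p)).
  { apply real_induction_unit.
    - replace (g 0) with p by (apply C_eq; simpl; ring). reflexivity.
    - (* closedness: continuity of G at g t *)
      intros t Ht Hbelow. apply NNPP. intros Hn.
      assert (He : 0 < Rabs (Cmod (G (g t)) - Cmod (G p))) by (apply Rabs_pos_lt; lra).
      destruct (quotient_at_continuous _ _ (HQ (g t) (proj1 (Hgin t ltac:(lra)))) _ He) as [d [Hd Hd']].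
      set (s := Rmax 0 (t - d / (2 * Im p))).
      assert (Hdp : 0 < d / (2 * Im p)) by (apply Rdiv_lt_0_compat; lra).
      assert (Hs : 0 <= s < t) by (split; [apply Rmax_l|apply Rmax_lub_lt; lra]).
      assert (Hsd : Cmod (g s - g t)%C < d).
      { rewrite Hgd, Rabs_left by lra. assert (t - d / (2 * Im p) <= s) by apply Rmax_r.
        assert ((t - s) * Im p <= d / (2 * Im p) * Im p) by (apply Rmult_le_compat_r; lra).
        assert (d = d / (2 * Im p) * Im p * 2) by (field; lra). lra. }
      specialize (Hd' _ Hsd). pose proof (Cmod_rev_tri (G (g s)) (G (g t))) as H1.
      rewrite (Hbelow s Hs), Rabs_minus_sym in H1. lra.
    - (* openness: local maximum modulus principle at the interior point g t *)
      intros t Ht HPt.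
      destruct (Hgin t ltac:(lra)) as [HgT HgTp].
      assert (HImT : 0 < Im (g t)) by (unfold g; simpl; nra).
      set (r0 := Rmin (r - Cmod (g t)) (Im (g t))).
      assert (Hr0 : 0 < r0) by (apply Rmin_pos; lra).
      destruct (quotient_at_local_max G (g t) r0 (HQ _ HgT) Hr0) as [d' [Hd' Hcst]].
      { intros z Hz. rewrite HPt. apply Hmax. apply (half_disc_interior_disc r (g t)). exact Hz. }
      exists (d' / (2 * Im p)). split; [apply Rdiv_lt_0_compat; lra|].
      intros s Hs. rewrite <- HPt. apply Hcst. rewrite Hgd, Rabs_pos_eq by lra.
      assert ((s - t) * Im p <= d' / (2 * Im p) * Im p) by (apply Rmult_le_compat_r; lra).
      assert (d' = d' / (2 * Im p) * Im p * 2) by (field; lra). lra. }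
  exists (g 1). split.
  - left. unfold g. simpl. split; [ring|]. apply Rabs_le_between. pose proof (re_le_Cmod p). lra.
  - intros z Hz. rewrite Hall by lra. apply Hmax. auto.
Qed.

Lemma prod_affine_app L1 L2 z : prod_affine (L1 ++ L2) z = (prod_affine L1 z * prod_affine L2 z)%C.
Proof. induction L1 as [|h L1 IH]; simpl; [ring|]. rewrite IH. ring. Qed.

Lemma prod_affine_repeat p q m z : prod_affine (repeat (p, q) m) z = ((p * z + q) ^ m)%C.
Proof. induction m as [|m IHm]; simpl; [reflexivity|]. rewrite IHm. simpl. ring. Qed.

Lemma prod_affine_nonzero L z :
  (forall pq, In pq L -> (fst pq * z + snd pq)%C <> RtoC 0) -> prod_affine L z <> RtoC 0.
Proof.
  induction L as [|h L IH]; intros H; simpl.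
  - exact C1_nz.
  - apply Cmult_neq_0; [apply H; left; auto|]. apply IH. intros; apply H; right; auto.
Qed.

(* Points where G is not given by phi get the value of the limit of phi there
   (the removable singularities of phi). *)
Definition has_limit_at (g : C -> C) (z v : C) : Prop :=
  forall eps, 0 < eps -> exists d, 0 < d /\ forall w, 0 < Cmod (w - z)%C < d -> Cmod (g w - v)%C < eps.

Definition regularize (phi : C -> C) (singular : C -> Prop) (z : C) : C :=
  if excluded_middle_informative (singular z)
  then epsilon (inhabits (RtoC 0)) (has_limit_at phi z)
  else phi z.

(* Limits at a point are unique (C has no isolated points). *)
Lemma has_limit_at_unique g z v1 v2 : has_limit_at g z v1 -> has_limit_at g z v2 -> v1 = v2.
Proof.
  intros H1 H2. apply Ceq_minus. apply Cmod_eq_0. apply Rle_antisym; [|apply Cmod_ge_0].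
  apply Rnot_lt_le. intros Hp.
  destruct (H1 (Cmod (v1 - v2)%C / 2) ltac:(lra)) as [d1 [Hd1 Hd1']].
  destruct (H2 (Cmod (v1 - v2)%C / 2) ltac:(lra)) as [d2 [Hd2 Hd2']].
  set (d := Rmin d1 d2 / 2).
  assert (Hm : 0 < Rmin d1 d2) by (apply Rmin_pos; auto).
  assert (Hd : 0 < d) by (unfold d; lra).
  assert (Hdl : d < d1) by (unfold d; pose proof (Rmin_l d1 d2); lra).
  assert (Hdr : d < d2) by (unfold d; pose proof (Rmin_r d1 d2); lra).
  set (w := (z + RtoC d)%C).
  assert (Hw : Cmod (w - z)%C = d).
  { unfold w. replace (z + RtoC d - z)%C with (RtoC d) by ring. rewrite Cmod_R, Rabs_pos_eq; lra. }
  specialize (Hd1' w ltac:(rewrite Hw; lra)).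
  specialize (Hd2' w ltac:(rewrite Hw; lra)).
  assert (Cmod (v1 - v2)%C <= Cmod (g w - v2)%C + Cmod (g w - v1)%C).
  { replace (v1 - v2)%C with ((g w - v2) + - (g w - v1))%C by ring.
    eapply Rle_trans; [apply Cmod_triangle|]. rewrite Cmod_opp. lra. }
  lra.
Qed.

Lemma regularize_quotient_at phi singular z0 rho F P a b :
  series_at F z0 rho a -> series_at P z0 rho b ->
  (forall w, Cmod (w - z0)%C < rho -> P w <> RtoC 0) ->
  (forall w, Cmod (w - z0)%C < rho -> ~ singular w -> phi w = (F w / P w)%C) ->
  (forall w, Cmod (w - z0)%C < rho -> singular w -> w = z0) ->
  quotient_at (regularize phi singular) z0.
Proof.
  intros HF HP HPnz Hphi Hsing. assert (Hrho : 0 < rho) by (destruct HF; auto).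
  assert (HQ : quotient_at (fun w => F w / P w)%C z0).
  { exists rho, F, P, a, b. split; [exact HF|]. split; [exact HP|]. intros w Hw. split; auto. }
  exists rho, F, P, a, b. split; [exact HF|]. split; [exact HP|].
  intros w Hw. split; [auto|]. unfold regularize.
  destruct (excluded_middle_informative (singular w)) as [Hs|Hs]; [|auto].
  rewrite (Hsing w Hw Hs).
  assert (Hlim : has_limit_at phi z0 (F z0 / P z0)%C).
  { intros eps He. destruct (quotient_at_continuous _ _ HQ eps He) as [d [Hd Hd']].
    exists (Rmin d rho). split; [apply Rmin_pos; lra|]. intros v [Hv0 Hv].
    assert (Hv1 : Cmod (v - z0)%C < d) by (pose proof (Rmin_l d rho); lra).
    assert (Hv2 : Cmod (v - z0)%C < rho) by (pose proof (Rmin_r d rho); lra).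
    rewrite Hphi; [apply Hd'; exact Hv1|exact Hv2|].
    intros Hsv. rewrite (Hsing v Hv2 Hsv), Cmod_sub_diag in Hv0. lra. }
  apply (has_limit_at_unique phi z0); [|exact Hlim]. apply epsilon_spec. eauto.
Qed.

(* A zero a of multiplicity m
   contributes ((z - a)(r^2 - a z))^m to the denominator and
   ((z - conj a)(r^2 - conj a z))^m to the numerator; each such quotient has
   modulus 1 on the real axis and on the circle |z| = r. *)
Definition blaschke_num (r : R) (l : list (C * nat)) : list (C * C) :=
  flat_map (fun am => repeat (RtoC 1, (- Cconj (fst am))%C) (snd am)
                      ++ repeat ((- Cconj (fst am))%C, RtoC (r * r)) (snd am)) l.
Definition blaschke_den (r : R) (l : list (C * nat)) : list (C * C) :=
  flat_map (fun am => repeat (RtoC 1, (- fst am)%C) (snd am)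
                      ++ repeat ((- fst am)%C, RtoC (r * r)) (snd am)) l.

Definition blaschke_quot (f : C -> C) r l (z : C) : C :=
  (f z * prod_affine (blaschke_num r l) z / prod_affine (blaschke_den r l) z)%C.

Definition blaschke_reg (f : C -> C) r l : C -> C :=
  regularize (blaschke_quot f r l) (fun z => prod_affine (blaschke_den r l) z = RtoC 0).

Lemma blaschke_num_cons r a m l z : prod_affine (blaschke_num r ((a, m) :: l)) z =
  ((RtoC 1 * z + - Cconj a) ^ m * (- Cconj a * z + RtoC (r * r)) ^ m * prod_affine (blaschke_num r l) z)%C.
Proof. unfold blaschke_num. simpl. rewrite !prod_affine_app, !prod_affine_repeat. ring. Qed.

Lemma blaschke_den_cons r a m l z : prod_affine (blaschke_den r ((a, m) :: l)) z =
  ((RtoC 1 * z + - a) ^ m * (- a * z + RtoC (r * r)) ^ m * prod_affine (blaschke_den r l) z)%C.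
Proof. unfold blaschke_den. simpl. rewrite !prod_affine_app, !prod_affine_repeat. ring. Qed.

Lemma blaschke_den_in r l pq : In pq (blaschke_den r l) -> exists am, In am l /\
  (pq = (RtoC 1, (- fst am)%C) \/ pq = ((- fst am)%C, RtoC (r * r))).
Proof.
  intros H. unfold blaschke_den in H. apply in_flat_map in H. destruct H as [am [Ham Hin]].
  exists am. split; auto. apply in_app_or in Hin. destruct Hin as [Hin|Hin]; apply repeat_spec in Hin; auto.
Qed.

Lemma blaschke_den_split r l1 a m l2 z :
  prod_affine (blaschke_den r (l1 ++ (a, m) :: l2)) z =
  ((RtoC 1 * z + - a) ^ m *
   prod_affine (blaschke_den r l1 ++ repeat ((- a)%C, RtoC (r * r)) m ++ blaschke_den r l2) z)%C.
Proof.
  unfold blaschke_den. rewrite flat_map_app. simpl. rewrite !prod_affine_app, !prod_affine_repeat. simpl. ring.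
Qed.

Lemma den_factors_nonzero r (L : list (C * C)) z : 0 < r -> Cmod z <= r ->
  (forall pq, In pq L -> (exists a, pq = (RtoC 1, (- a)%C) /\ a <> z) \/
                        (exists a, pq = ((- a)%C, RtoC (r * r)) /\ Cmod a < r)) ->
  prod_affine L z <> RtoC 0.
Proof.
  intros Hr Hz H. apply prod_affine_nonzero. intros pq Hpq.
  destruct (H pq Hpq) as [[a [-> Ha]]|[a [-> Ha]]]; simpl.
  - intro E. apply Ha. replace z with ((RtoC 1 * z + - a) + a)%C by ring. rewrite E. ring.
  - intro E. assert (E2 : (a * z)%C = RtoC (r * r)).
    { replace (a * z)%C with (RtoC (r * r) - (- a * z + RtoC (r * r)))%C by ring. rewrite E. ring. }
    apply (f_equal Cmod) in E2. rewrite Cmod_mult, Cmod_R, Rabs_pos_eq in E2 by nra.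
    assert (0 <= Cmod a) by apply Cmod_ge_0. assert (0 <= Cmod z) by apply Cmod_ge_0. nra.
Qed.

Lemma blaschke_den_nonzero r l z : 0 < r -> Cmod z <= r ->
  (forall am, In am l -> Cmod (fst am) < r /\ ((0 < snd am)%nat -> fst am <> z)) ->
  prod_affine (blaschke_den r l) z <> RtoC 0.
Proof.
  intros Hr Hz H. apply (den_factors_nonzero r); auto. intros pq Hpq.
  unfold blaschke_den in Hpq. apply in_flat_map in Hpq. destruct Hpq as [am [Ham Hin]].
  destruct (H am Ham) as [H1 H2].
  assert (Hm : (0 < snd am)%nat) by (destruct (snd am); [apply in_app_or in Hin; destruct Hin as [[]|[]]|lia]).
  apply in_app_or in Hin. destruct Hin as [Hin|Hin]; apply repeat_spec in Hin; subst pq.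
  - left. exists (fst am). auto.
  - right. exists (fst am). auto.
Qed.

Section BlaschkeRegularization.

Variables (f : C -> C) (r : R) (l : list (C * nat)) (U : C -> Prop).
Hypothesis Hr : 0 < r.
Hypothesis HU : forall z, half_disc r z -> U z.
Hypothesis Han : analytic_on U f.
Hypothesis Hnd : NoDup (map fst l).
Hypothesis Hl : forall am, In am l -> Cmod (fst am) < r /\ zero_order f (fst am) (snd am).

Let D := prod_affine (blaschke_den r l).
Let N := prod_affine (blaschke_num r l).

Lemma blaschke_reg_at_regular z0 : half_disc r z0 -> D z0 <> RtoC 0 -> quotient_at (blaschke_reg f r l) z0.
Proof.
  intros Hz0 HD.
  destruct (series_at_of_analytic _ f z0 Han (HU z0 Hz0)) as [rhof [af Haf]].
  destruct (series_at_prod_affine (blaschke_num r l) _ _ _ _ Haf) as [aF HF].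
  destruct (series_at_poly (blaschke_den r l) z0 rhof) as [aP HP]; [destruct Haf; auto|].
  destruct (series_at_nonzero_near _ _ _ _ HP HD) as [d [Hd HDnz]].
  apply (regularize_quotient_at _ _ z0 d (fun z => N z * f z)%C D aF aP).
  - apply (series_at_shrink _ _ _ _ _ HF). lra.
  - apply (series_at_shrink _ _ _ _ _ HP). lra.
  - exact HDnz.
  - intros w Hw _. unfold blaschke_quot. fold N D. field. auto.
  - intros w Hw Hs. exfalso. exact (HDnz w Hw Hs).
Qed.

(* At a listed zero a of order m, write f = (z - a)^m h and D = (z - a)^m D'
   near a; then the auxiliary function is (N h) / D' there. *)
Lemma blaschke_reg_at_zero a m : In (a, m) l -> half_disc r a -> quotient_at (blaschke_reg f r l) a.
Proof.
  intros Ham Ha. destruct (in_split _ _ Ham) as [l1 [l2 El]].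
  destruct (proj2 (Hl _ Ham)) as [rho1 [Hrho1 [h [Hh [Hha Hfh]]]]]. simpl in *.
  set (D' := prod_affine (blaschke_den r l1 ++ repeat ((- a)%C, RtoC (r * r)) m ++ blaschke_den r l2)).
  assert (Hnin : ~ In a (map fst l1 ++ map fst l2)).
  { rewrite El, map_app in Hnd. simpl in Hnd. apply (NoDup_remove_2 _ _ _ Hnd). }
  assert (Hin1 : forall am, In am l1 -> In am l) by (intros am H; rewrite El; apply in_or_app; auto).
  assert (Hin2 : forall am, In am l2 -> In am l) by (intros am H; rewrite El; apply in_or_app; right; right; auto).
  assert (HD' : D' a <> RtoC 0).
  { apply (den_factors_nonzero r); [exact Hr|apply (proj1 Ha)|]. intros pq Hpq.
    apply in_app_or in Hpq. destruct Hpq as [Hpq|Hpq]; [|apply in_app_or in Hpq; destruct Hpq as [Hpq|Hpq]].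
    - destruct (blaschke_den_in r l1 pq Hpq) as [am [Ham1 [->| ->]]].
      + left. exists (fst am). split; auto. intro E. apply Hnin, in_or_app. left. rewrite <- E. apply in_map. auto.
      + right. exists (fst am). split; auto. apply Hl, Hin1. auto.
    - apply repeat_spec in Hpq. subst pq. right. exists a. split; auto. apply (Hl _ Ham).
    - destruct (blaschke_den_in r l2 pq Hpq) as [am [Ham1 [->| ->]]].
      + left. exists (fst am). split; auto. intro E. apply Hnin, in_or_app. right. rewrite <- E. apply in_map. auto.
      + right. exists (fst am). split; auto. apply Hl, Hin2. auto. }
  destruct (series_at_of_analytic _ h a Hh) as [rhoh [ah Hah]]; [rewrite Cmod_sub_diag; auto|].
  destruct (series_at_prod_affine (blaschke_num r l) _ _ _ _ Hah) as [aF HF].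
  destruct (series_at_poly (blaschke_den r l1 ++ repeat ((- a)%C, RtoC (r * r)) m ++ blaschke_den r l2) a rhoh)
    as [aP HP]; [destruct Hah; auto|].
  fold D' in HP.
  destruct (series_at_nonzero_near _ _ _ _ HP HD') as [d [Hd HDnz]].
  set (rho := Rmin d rho1).
  assert (Hrho : 0 < rho) by (apply Rmin_pos; lra).
  assert (Hrd : rho <= d) by apply Rmin_l. assert (Hr1 : rho <= rho1) by apply Rmin_r.
  assert (Hfac : forall w, D w = ((RtoC 1 * w + - a) ^ m * D' w)%C)
    by (intros w; unfold D; rewrite El; apply blaschke_den_split).
  apply (regularize_quotient_at _ _ a rho (fun z => N z * h z)%C D' aF aP).
  - apply (series_at_shrink _ _ _ _ _ HF). lra.
  - apply (series_at_shrink _ _ _ _ _ HP). lra.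
  - intros w Hw. apply HDnz. lra.
  - intros w Hw Hs. fold D in Hs. unfold blaschke_quot. fold N D.
    assert (HD'w : D' w <> RtoC 0) by (apply HDnz; lra).
    rewrite Hfac in Hs |- *. rewrite Hfh by lra.
    replace (w - a)%C with (RtoC 1 * w + - a)%C by ring.
    field. split; auto. intro E. apply Hs. rewrite E. ring.
  - intros w Hw Hs. fold D in Hs. rewrite Hfac in Hs.
    destruct (Ceq_dec w a) as [|Hwa]; auto. exfalso. revert Hs.
    apply Cmult_neq_0; [apply Cpow_nz|apply HDnz; lra].
    intro E. apply Hwa. replace w with ((RtoC 1 * w + - a) + a)%C by ring. rewrite E. ring.
Qed.

Lemma blaschke_reg_quotient_at z0 : half_disc r z0 -> quotient_at (blaschke_reg f r l) z0.
Proof.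
  intros Hz0. destruct (excluded_middle_informative (D z0 = RtoC 0)) as [HD|HD].
  - assert (Hex : exists am, In am l /\ (0 < snd am)%nat /\ fst am = z0).
    { apply NNPP. intros Hn. apply (blaschke_den_nonzero r l z0 Hr (proj1 Hz0)); [|exact HD].
      intros am Ham. split; [apply Hl; auto|]. intros Hm E. apply Hn. eauto. }
    destruct Hex as [[a m] [Ham [_ Ea]]]. simpl in Ea. subst z0.
    apply (blaschke_reg_at_zero a m Ham Hz0).
  - apply blaschke_reg_at_regular; auto.
Qed.

End BlaschkeRegularization.

Lemma Lambda_gt_1 r alpha beta eta Y : 0 < r -> 0 < eta -> 0 < Y -> 0 < alpha < 1 -> 0 < beta < 1 ->
  beta * ((1 - alpha) / (alpha + beta)) ^ 2 > Y / eta -> Lambda r alpha beta eta Y > 1.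
Proof.
  intros Hr He HY0 Ha Hb H. unfold Lambda.
  assert (Hab : 0 < (alpha + beta) ^ 2) by (apply pow_lt; lra).
  assert (H1a : 0 < (1 - alpha) ^ 2) by (apply pow_lt; lra).
  assert (HY : Y * (alpha + beta) ^ 2 < beta * eta * (1 - alpha) ^ 2).
  { replace (beta * ((1 - alpha) / (alpha + beta)) ^ 2) with (beta * (1 - alpha) ^ 2 / (alpha + beta) ^ 2) in H
      by (field; lra).
    apply (Rmult_lt_compat_r (eta * (alpha + beta) ^ 2)) in H; [|nra].
    replace (Y / eta * (eta * (alpha + beta) ^ 2)) with (Y * (alpha + beta) ^ 2) in H by (field; lra).
    replace (beta * (1 - alpha) ^ 2 / (alpha + beta) ^ 2 * (eta * (alpha + beta) ^ 2))
      with (beta * eta * (1 - alpha) ^ 2) in H by (field; lra).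
    exact H. }
  set (A := 4 * beta * eta / (alpha + beta) ^ 2). set (B := 4 * Y / (1 - alpha) ^ 2).
  assert (HAB : B < A).
  { unfold A, B. apply (Rmult_lt_reg_r ((1 - alpha) ^ 2 * (alpha + beta) ^ 2)); [nra|].
    replace (4 * Y / (1 - alpha) ^ 2 * ((1 - alpha) ^ 2 * (alpha + beta) ^ 2))
      with (4 * (Y * (alpha + beta) ^ 2)) by (field; lra).
    replace (4 * beta * eta / (alpha + beta) ^ 2 * ((1 - alpha) ^ 2 * (alpha + beta) ^ 2))
      with (4 * (beta * eta * (1 - alpha) ^ 2)) by (field; lra).
    lra. }
  assert (HB : 0 < 1 + B * / r).
  { assert (0 <= B * / r) by (apply Rmult_le_pos; [unfold B; apply Rdiv_le_0_compat; lra|apply Rlt_le, Rinv_0_lt_compat; lra]).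
    lra. }
  apply Rlt_gt. apply (Rmult_lt_reg_r (1 + B * / r)); auto. rewrite Rmult_1_l.
  unfold Rdiv at 1. rewrite Rmult_assoc, Rinv_l, Rmult_1_r by lra.
  apply Rplus_lt_compat_l. apply Rmult_lt_compat_r; [apply Rinv_0_lt_compat; lra|exact HAB].
Qed.

(* For a zero a = x + i y of the strip region and c = i beta r, the near factor
   |c - conj a|^2 = |c - a|^2 + 4 beta r y gains at least the factor
   1 + 4 beta eta / ((alpha + beta)^2 r), since |c - a| <= (alpha + beta) r. *)
Lemma near_factor_gain r alpha beta eta x y : 0 < r -> 0 < alpha -> 0 < beta -> 0 < eta ->
  eta <= y -> x ^ 2 + y ^ 2 <= (alpha * r) ^ 2 ->
  (x ^ 2 + (beta * r - y) ^ 2) * (1 + (4 * beta * eta) / ((alpha + beta) ^ 2) * / r)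
  <= x ^ 2 + (beta * r + y) ^ 2.
Proof.
  intros Hr Ha Hb He Hy Hxy. set (P1 := x ^ 2 + (beta * r - y) ^ 2).
  assert (Hab : 0 < (alpha + beta) ^ 2) by (apply pow_lt; lra).
  assert (HP1 : P1 <= (alpha + beta) ^ 2 * r ^ 2).
  { assert (0 <= alpha * beta * r ^ 2) by (apply Rmult_le_pos; [nra|apply pow2_ge_0]).
    assert (0 <= beta * r * y) by (apply Rmult_le_pos; [nra|lra]).
    unfold P1. nra. }
  assert (HG : P1 * ((4 * beta * eta) / ((alpha + beta) ^ 2) * / r) <= 4 * beta * r * eta).
  { replace (P1 * ((4 * beta * eta) / ((alpha + beta) ^ 2) * / r))
      with (4 * beta * eta * (P1 / ((alpha + beta) ^ 2 * r))) by (field; lra).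
    replace (4 * beta * r * eta) with (4 * beta * eta * ((alpha + beta) ^ 2 * r ^ 2 / ((alpha + beta) ^ 2 * r)))
      by (field; lra).
    apply Rmult_le_compat_l; [nra|]. apply Rmult_le_compat_r; [apply Rlt_le, Rinv_0_lt_compat; nra|auto]. }
  replace (x ^ 2 + (beta * r + y) ^ 2) with (P1 + 4 * beta * r * y) by (unfold P1; ring).
  assert (4 * beta * r * eta <= 4 * beta * r * y) by (apply Rmult_le_compat_l; nra).
  rewrite Rmult_plus_distr_l, Rmult_1_r. lra.
Qed.

(* The far factor |r^2 - a c|^2 = |r^2 - conj a c|^2 + 4 beta r^3 y loses at most
   the factor 1 + 4 Y / ((1 - alpha)^2 r), since |r^2 - conj a c| >= (1 - alpha) r^2. *)
Lemma far_factor_loss r alpha beta Y x y : 0 < r -> 0 < alpha < 1 -> 0 < beta < 1 ->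
  0 <= y <= Y -> x ^ 2 + y ^ 2 <= (alpha * r) ^ 2 ->
  (r ^ 2 + y * beta * r) ^ 2 + (x * beta * r) ^ 2
  <= ((r ^ 2 - y * beta * r) ^ 2 + (x * beta * r) ^ 2) * (1 + (4 * Y) / ((1 - alpha) ^ 2) * / r).
Proof.
  intros Hr Ha Hb Hy Hxy. set (P2 := (r ^ 2 - y * beta * r) ^ 2 + (x * beta * r) ^ 2).
  assert (H1a : 0 < (1 - alpha) ^ 2) by (apply pow_lt; lra).
  assert (Hyr : y <= alpha * r) by (assert (0 < alpha * r) by nra; nra).
  assert (Hr2 : (1 - alpha) * r ^ 2 <= r ^ 2 - y * beta * r).
  { assert (y * beta * r <= y * r) by (assert (0 <= y * r * (1 - beta)) by (apply Rmult_le_pos; nra); nra).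
    nra. }
  assert (HP2 : (1 - alpha) ^ 2 * r ^ 4 <= P2).
  { assert (0 <= (1 - alpha) * r ^ 2) by (apply Rmult_le_pos; [lra|apply pow2_ge_0]).
    assert (((1 - alpha) * r ^ 2) ^ 2 <= (r ^ 2 - y * beta * r) ^ 2) by (apply pow_incr; lra).
    assert (0 <= (x * beta * r) ^ 2) by apply pow2_ge_0. unfold P2. nra. }
  assert (HL : 4 * r ^ 3 * Y <= P2 * ((4 * Y) / ((1 - alpha) ^ 2) * / r)).
  { replace (P2 * ((4 * Y) / ((1 - alpha) ^ 2) * / r)) with (4 * Y * (P2 / ((1 - alpha) ^ 2 * r))) by (field; lra).
    replace (4 * r ^ 3 * Y) with (4 * Y * ((1 - alpha) ^ 2 * r ^ 4 / ((1 - alpha) ^ 2 * r))) by (field; lra).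
    apply Rmult_le_compat_l; [lra|]. apply Rmult_le_compat_r; [apply Rlt_le, Rinv_0_lt_compat; nra|auto]. }
  assert (Hby : 4 * beta * r ^ 3 * y <= 4 * r ^ 3 * Y).
  { assert (0 < r ^ 3) by (apply pow_lt; lra). assert (beta * y <= Y) by nra. nra. }
  replace ((r ^ 2 + y * beta * r) ^ 2 + (x * beta * r) ^ 2) with (P2 + 4 * beta * r ^ 3 * y) by (unfold P2; ring).
  rewrite Rmult_plus_distr_l, Rmult_1_r. lra.
Qed.

Lemma blaschke_factor_gain r alpha beta eta Y (a : C) :
  0 < r -> 0 < alpha < 1 -> 0 < beta < 1 -> 0 < eta -> eta <= Im a <= Y -> Cmod a <= alpha * r ->
  let c := ((0, beta * r) : C) in
  Lambda r alpha beta eta Y * (Cmod (RtoC 1 * c + - a)%C ^ 2 * Cmod (- a * c + RtoC (r * r))%C ^ 2)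
  <= Cmod (RtoC 1 * c + - Cconj a)%C ^ 2 * Cmod (- Cconj a * c + RtoC (r * r))%C ^ 2.
Proof.
  intros Hr Ha Hb He Hy Hm c.
  assert (Hm2 : Re a ^ 2 + Im a ^ 2 <= (alpha * r) ^ 2).
  { rewrite <- Cmod2_alt. apply pow_incr. split; [apply Cmod_ge_0|auto]. }
  destruct a as [x y]. simpl in Hy, Hm2.
  assert (Hnear := near_factor_gain r alpha beta eta x y Hr (proj1 Ha) (proj1 Hb) He (proj1 Hy) Hm2).
  assert (Hfar := far_factor_loss r alpha beta Y x y Hr Ha Hb ltac:(lra) Hm2).
  set (P1 := x ^ 2 + (beta * r - y) ^ 2) in *. set (N1 := x ^ 2 + (beta * r + y) ^ 2) in *.
  set (P2 := (r ^ 2 - y * beta * r) ^ 2 + (x * beta * r) ^ 2) in *.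
  set (Q2 := (r ^ 2 + y * beta * r) ^ 2 + (x * beta * r) ^ 2) in *.
  set (L1 := 1 + (4 * beta * eta) / ((alpha + beta) ^ 2) * / r) in *.
  set (L2 := 1 + (4 * Y) / ((1 - alpha) ^ 2) * / r) in *.
  replace (Cmod (RtoC 1 * c + - (x, y))%C ^ 2) with P1 by (rewrite Cmod2_alt; unfold P1, c; simpl; ring).
  replace (Cmod (- (x, y) * c + RtoC (r * r))%C ^ 2) with Q2 by (rewrite Cmod2_alt; unfold Q2, c; simpl; ring).
  replace (Cmod (RtoC 1 * c + - Cconj (x, y))%C ^ 2) with N1 by (rewrite Cmod2_alt; unfold N1, c; simpl; ring).
  replace (Cmod (- Cconj (x, y) * c + RtoC (r * r))%C ^ 2) with P2
    by (rewrite Cmod2_alt; unfold P2, c; simpl; ring).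
  change (Lambda r alpha beta eta Y) with (L1 / L2).
  assert (HL1 : 0 <= L1).
  { unfold L1. assert (0 <= (4 * beta * eta) / ((alpha + beta) ^ 2) * / r); [|lra].
    apply Rmult_le_pos; [apply Rdiv_le_0_compat; [nra|apply pow_lt; lra]|apply Rlt_le, Rinv_0_lt_compat; lra]. }
  assert (HL2 : 0 < L2).
  { unfold L2. assert (0 <= (4 * Y) / ((1 - alpha) ^ 2) * / r); [|lra].
    apply Rmult_le_pos; [apply Rdiv_le_0_compat; [lra|apply pow_lt; lra]|apply Rlt_le, Rinv_0_lt_compat; lra]. }
  assert (HP1 : 0 <= P1) by (unfold P1; apply Rplus_le_le_0_compat; apply pow2_ge_0).
  assert (HP2 : 0 <= P2) by (unfold P2; apply Rplus_le_le_0_compat; apply pow2_ge_0).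
  apply Rle_trans with (L1 / L2 * (P1 * (P2 * L2))).
  - apply Rmult_le_compat_l; [apply Rdiv_le_0_compat; lra|]. apply Rmult_le_compat_l; lra.
  - replace (L1 / L2 * (P1 * (P2 * L2))) with (P1 * L1 * P2) by (field; lra).
    apply Rmult_le_compat_r; lra.
Qed.

Lemma blaschke_factor_boundary r (a q : C) : 0 < r -> half_disc_boundary r q ->
  Cmod (RtoC 1 * q + - Cconj a)%C * Cmod (- Cconj a * q + RtoC (r * r))%C =
  Cmod (RtoC 1 * q + - a)%C * Cmod (- a * q + RtoC (r * r))%C.
Proof.
  intros Hr Hq. apply Rsqr_inj; try (apply Rmult_le_pos; apply Cmod_ge_0).
  rewrite !Rsqr_mult, !Rsqr_pow2, !Cmod2_alt.
  destruct a as [x y]. destruct q as [u v]. simpl in *.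
  destruct Hq as [[Hv _]|[Hc Hv]].
  - unfold Im in Hv. simpl in Hv. rewrite Hv. ring.
  - assert (Hr2 : r * r = u * u + v * v).
    { assert (H := Cmod2_alt (u, v)). rewrite Hc in H. simpl in H. lra. }
    rewrite !Hr2. ring.
Qed.

Lemma blaschke_boundary r l q : 0 < r -> half_disc_boundary r q ->
  Cmod (prod_affine (blaschke_num r l) q) = Cmod (prod_affine (blaschke_den r l) q).
Proof.
  intros Hr Hq. induction l as [|[a m] l IH]; [reflexivity|].
  rewrite blaschke_num_cons, blaschke_den_cons, !Cmod_mult, !Cmod_pow, IH.
  f_equal. rewrite <- !Rpow_mult_distr. f_equal. apply blaschke_factor_boundary; auto.
Qed.

Lemma blaschke_interior_gain (L r : R) (c : C) l : 0 <= L ->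
  (forall am, In am l ->
     L * (Cmod (RtoC 1 * c + - fst am)%C ^ 2 * Cmod (- fst am * c + RtoC (r * r))%C ^ 2)
     <= Cmod (RtoC 1 * c + - Cconj (fst am))%C ^ 2 * Cmod (- Cconj (fst am) * c + RtoC (r * r))%C ^ 2) ->
  L ^ (list_sum (map snd l)) * Cmod (prod_affine (blaschke_den r l) c) ^ 2
  <= Cmod (prod_affine (blaschke_num r l) c) ^ 2.
Proof.
  intros HL Hl. induction l as [|[a m] l IH]; [simpl; lra|].
  simpl list_sum. rewrite blaschke_num_cons, blaschke_den_cons, !Cmod_mult, !Cmod_pow.
  assert (IH' := IH (fun am H => Hl am (or_intror H))).
  assert (Hf := Hl (a, m) (or_introl eq_refl)). simpl in Hf.
  set (A1 := Cmod (RtoC 1 * c + - a)%C) in *. set (B1 := Cmod (- a * c + RtoC (r * r))%C) in *.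
  set (A2 := Cmod (RtoC 1 * c + - Cconj a)%C) in *. set (B2 := Cmod (- Cconj a * c + RtoC (r * r))%C) in *.
  set (Rd := Cmod (prod_affine (blaschke_den r l) c)) in *.
  set (Rn := Cmod (prod_affine (blaschke_num r l) c)) in *.
  assert (Hsq : forall u v w : R, (u ^ m * v ^ m * w) ^ 2 = (u ^ 2 * v ^ 2) ^ m * w ^ 2).
  { intros u v w. rewrite !Rpow_mult_distr, <- !pow_mult, (Nat.mul_comm m 2). reflexivity. }
  rewrite !Hsq, pow_add.
  assert (Hm1 : L ^ m * (A1 ^ 2 * B1 ^ 2) ^ m <= (A2 ^ 2 * B2 ^ 2) ^ m).
  { rewrite <- Rpow_mult_distr. apply pow_incr. split; [|exact Hf].
    apply Rmult_le_pos; [auto|]. apply Rmult_le_pos; apply pow2_ge_0. }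
  assert (0 <= L ^ m * (A1 ^ 2 * B1 ^ 2) ^ m)
    by (apply Rmult_le_pos; apply pow_le; [auto|apply Rmult_le_pos; apply pow2_ge_0]).
  assert (0 <= L ^ list_sum (map snd l) * Rd ^ 2) by (apply Rmult_le_pos; [apply pow_le; auto|apply pow2_ge_0]).
  replace (L ^ m * L ^ list_sum (map snd l) * ((A1 ^ 2 * B1 ^ 2) ^ m * Rd ^ 2))
    with ((L ^ m * (A1 ^ 2 * B1 ^ 2) ^ m) * (L ^ list_sum (map snd l) * Rd ^ 2)) by ring.
  apply Rmult_le_compat; auto.
Qed.

Lemma boundary_in_half_disc r q : 0 < r -> half_disc_boundary r q -> half_disc r q.
Proof.
  intros Hr [[Hi Hre]|[Hc Hi]]; [|split; lra].
  split; [|lra]. assert (H := Cmod2_alt q). rewrite Hi in H.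
  assert (Re q ^ 2 <= r ^ 2).
  { rewrite <- (pow2_abs (Re q)). apply pow_incr. split; [apply Rabs_pos|apply Rabs_le; lra]. }
  assert (0 <= Cmod q) by apply Cmod_ge_0. destruct (Rle_or_lt (Cmod q) r); auto. nra.
Qed.

Lemma quotient_at_of_analytic U f z : analytic_on U f -> U z -> quotient_at f z.
Proof.
  intros Han Hz. destruct (series_at_of_analytic _ _ _ Han Hz) as [rho [a Ha]].
  assert (Hr : 0 < rho) by (destruct Ha; auto).
  exists rho, f, (fun _ => RtoC 1), a, (const_coef (RtoC 1)).
  split; [auto|]. split; [apply series_at_const; auto|].
  intros w _. split; [apply C1_nz|]. field. apply C1_nz.
Qed.

Lemma sup_boundary_ge r f U q : 0 < r -> (forall z, half_disc r z -> U z) -> analytic_on U f ->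
  half_disc_boundary r q -> Cmod (f q) <= sup_boundary r f.
Proof.
  intros Hr HU Han Hq.
  destruct (half_disc_attains_max r (fun z => Cmod (f z)) Hr) as [p [Hp Hmax]].
  { intros z Hz eps He.
    destruct (quotient_at_continuous _ _ (quotient_at_of_analytic U f z Han (HU z Hz)) eps He) as [d [Hd Hd']].
    exists d. split; auto. intros w _ Hw. eapply Rle_lt_trans; [apply Cmod_rev_tri|]. auto. }
  unfold sup_boundary.
  destruct (Lub_Rbar_correct (fun x => exists z, half_disc_boundary r z /\ x = Cmod (f z))) as [Hub Hlub].
  assert (H1 := Hub (Cmod (f q)) (ex_intro _ q (conj Hq eq_refl))).
  assert (H2 := Hlub (Finite (Cmod (f p)))).
  destruct (Lub_Rbar _) as [x| |]; simpl in *; auto.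
  - exfalso. apply H2. intros y [z [Hz ->]]. simpl. apply Hmax. apply boundary_in_half_disc; auto.
  - contradiction.
Qed.

Lemma zero_order_value f a m : zero_order f a m -> (0 < m)%nat -> f a = RtoC 0.
Proof.
  intros [rho [Hr [h [_ [_ Hf]]]]] Hm. rewrite Hf by (rewrite Cmod_sub_diag; auto).
  destruct m as [|m]; [lia|]. rewrite Cpow_S. replace (a - a)%C with (RtoC 0) by ring. ring.
Qed.

Lemma blaschke_max_bound r f U l c : 0 < r -> (forall z, half_disc r z -> U z) -> analytic_on U f ->
  NoDup (map fst l) -> (forall am, In am l -> Cmod (fst am) < r /\ zero_order f (fst am) (snd am)) ->
  (forall am, In am l -> 0 < Im (fst am)) -> half_disc r c -> f c <> RtoC 0 ->
  prod_affine (blaschke_den r l) c <> RtoC 0 /\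
  Cmod (f c) * Cmod (prod_affine (blaschke_num r l) c)
  <= sup_boundary r f * Cmod (prod_affine (blaschke_den r l) c).
Proof.
  intros Hr HU Han Hnd Hl Him Hc Hfc.
  destruct (maximum_principle_half_disc r (blaschke_reg f r l) Hr
              (blaschke_reg_quotient_at f r l U Hr HU Han Hnd Hl)) as [q [Hq Hmax]].
  assert (Hden : forall z, half_disc r z -> (forall am, In am l -> (0 < snd am)%nat -> fst am <> z) ->
                   prod_affine (blaschke_den r l) z <> RtoC 0 /\ blaschke_reg f r l z = blaschke_quot f r l z).
  { intros z Hz Hnz. assert (HD : prod_affine (blaschke_den r l) z <> RtoC 0).
    { apply blaschke_den_nonzero; [exact Hr|apply Hz|]. intros am Ham. split; [apply Hl|apply Hnz]; auto. }
    split; [exact HD|]. unfold blaschke_reg, regularize.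
    destruct (excluded_middle_informative _); [contradiction|reflexivity]. }
  destruct (Hden c Hc) as [HDc HGc].
  { intros am Ham Hm E. apply Hfc. rewrite <- E. apply (zero_order_value f _ (snd am)); auto. apply Hl; auto. }
  destruct (Hden q (boundary_in_half_disc r q Hr Hq)) as [HDq HGq].
  { intros am Ham _ E. destruct (Hl am Ham) as [Hlt _]. specialize (Him am Ham). rewrite E in Hlt, Him.
    destruct Hq as [[Hq1 _]|[Hq1 _]]; lra. }
  split; [exact HDc|].
  specialize (Hmax c Hc). rewrite HGc, HGq in Hmax. unfold blaschke_quot in Hmax.
  rewrite !Cmod_div, !Cmod_mult, (blaschke_boundary r l q Hr Hq) in Hmax by auto.
  assert (HDcp : 0 < Cmod (prod_affine (blaschke_den r l) c)) by (apply Cmod_gt_0; auto).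
  assert (HDqp : 0 < Cmod (prod_affine (blaschke_den r l) q)) by (apply Cmod_gt_0; auto).
  assert (HM := sup_boundary_ge r f U q Hr HU Han Hq).
  replace (Cmod (f q) * Cmod (prod_affine (blaschke_den r l) q) / Cmod (prod_affine (blaschke_den r l) q))
    with (Cmod (f q)) in Hmax by (field; lra).
  apply (Rmult_le_compat_r (Cmod (prod_affine (blaschke_den r l) c))) in Hmax; [|lra].
  unfold Rdiv in Hmax. rewrite Rmult_assoc, Rinv_l, Rmult_1_r in Hmax by lra.
  eapply Rle_trans; [exact Hmax|]. apply Rmult_le_compat_r; lra.
Qed.

Lemma power_bound_of_products (L M fc Nc Dc : R) (n : nat) :
  0 < fc -> 0 <= Nc -> 0 < Dc -> fc * Nc <= M * Dc -> L ^ n * Dc ^ 2 <= Nc ^ 2 -> L ^ n <= (M / fc) ^ 2.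
Proof.
  intros Hfc HNc HDc Hmax Hgain.
  assert (HM : 0 <= M * Dc) by (assert (0 <= fc * Nc) by nra; lra).
  assert (Hsq : (fc * Nc) ^ 2 <= (M * Dc) ^ 2) by (apply pow_incr; split; [nra|exact Hmax]).
  apply (Rmult_le_reg_r (fc ^ 2 * Dc ^ 2)); [apply Rmult_lt_0_compat; apply pow_lt; lra|].
  replace ((M / fc) ^ 2 * (fc ^ 2 * Dc ^ 2)) with ((M * Dc) ^ 2) by (field; lra).
  replace (L ^ n * (fc ^ 2 * Dc ^ 2)) with (fc ^ 2 * (L ^ n * Dc ^ 2)) by ring.
  eapply Rle_trans; [|exact Hsq]. replace ((fc * Nc) ^ 2) with (fc ^ 2 * Nc ^ 2) by ring.
  apply Rmult_le_compat_l; [apply pow2_ge_0|exact Hgain].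
Qed.

Lemma count_bound_of_power_bound (L x m : R) (n : nat) :
  1 < L -> 0 <= x -> 0 < m <= 1 -> L ^ n <= x ^ 2 -> INR n <= 2 / ln L * ln (/ m * x).
Proof.
  intros HL Hx Hm Hpow.
  assert (HLn : 0 < L ^ n) by (apply pow_lt; lra).
  assert (Hxp : 0 < x) by (destruct (Rle_lt_or_eq_dec _ _ Hx) as [|<-]; [auto|simpl in Hpow; lra]).
  assert (HlnL : 0 < ln L) by (rewrite <- ln_1; apply ln_increasing; lra).
  assert (Hlog : INR n * ln L <= 2 * ln x).
  { rewrite <- ln_pow by lra. replace (2 * ln x) with (ln (x ^ 2)) by (rewrite ln_pow by lra; simpl; ring).
    apply ln_le; auto. }
  assert (Hinv : 0 <= ln (/ m)).
  { rewrite <- ln_1. apply ln_le; [lra|]. rewrite <- Rinv_1. apply Rinv_le_contravar; lra. }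
  rewrite ln_mult by (try apply Rinv_0_lt_compat; lra).
  apply (Rmult_le_reg_r (ln L / 2)); [apply Rdiv_lt_0_compat; lra|].
  replace (2 / ln L * (ln (/ m) + ln x) * (ln L / 2)) with (ln (/ m) + ln x) by (field; lra).
  lra.
Qed.

Theorem mainTheorem8 :
  forall (r : R) (f : C -> C) (Y eta alpha beta : R),
    0 < r ->
    analytic_near_half_disc r f ->
    0 < eta -> eta < Y -> Y < r ->
    0 < alpha < 1 -> 0 < beta < 1 ->
    beta * ((1 - alpha) / (alpha + beta)) ^ 2 > Y / eta ->
    f (0, beta * r) <> 0%C ->
    (forall l : list (C * nat),
        NoDup (map fst l) ->
        List.Forall (fun p => strip_region (alpha * r) eta Y (fst p) /\
                         zero_order f (fst p) (snd p)) l ->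
        INR (list_sum (map snd l)) <=
          2 / ln (Lambda r alpha beta eta Y) *
          ln (/ Rmin beta (1 - beta) *
              (sup_boundary r f / Cmod (f (0, beta * r))))) /\
    Lambda r alpha beta eta Y > 1.
Proof.
  intros r f Y eta alpha beta Hr [U [_ [HU Han]]] He HeY _ Ha Hb Hcond Hfc.
  assert (HLam : Lambda r alpha beta eta Y > 1) by (apply Lambda_gt_1; auto; lra).
  split; [|exact HLam]. intros l Hnd Hl. rewrite Forall_forall in Hl.
  set (c := ((0, beta * r) : C)) in *.
  assert (Hc : half_disc r c).
  { split; [|simpl; nra]. unfold c. rewrite Cmod_im0, Rabs_pos_eq by nra. nra. }
  assert (Hzeros : forall am, In am l -> Cmod (fst am) < r /\ zero_order f (fst am) (snd am)).
  { intros am Ham. destruct (Hl am Ham) as [[_ Hm] Hz]. split; [nra|exact Hz]. }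
  destruct (blaschke_max_bound r f U l c Hr HU Han Hnd Hzeros) as [HDc Hmax]; auto.
  { intros am Ham. destruct (Hl am Ham) as [[[Him _] _] _]. lra. }
  assert (Hgain := blaschke_interior_gain (Lambda r alpha beta eta Y) r c l ltac:(lra)).
  assert (HM : 0 <= sup_boundary r f).
  { apply Rle_trans with (Cmod (f (RtoC r))); [apply Cmod_ge_0|].
    apply (sup_boundary_ge r f U); auto. left. simpl. split; [reflexivity|lra]. }
  assert (Hmin : 0 < Rmin beta (1 - beta) <= 1).
  { split; [apply Rmin_pos; lra|]. pose proof (Rmin_l beta (1 - beta)). lra. }
  apply count_bound_of_power_bound; [lra|apply Rdiv_le_0_compat; [exact HM|apply Cmod_gt_0; auto]|exact Hmin|].
  apply (power_bound_of_products _ _ _ (Cmod (prod_affine (blaschke_num r l) c))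
           (Cmod (prod_affine (blaschke_den r l) c))); auto.
  - apply Cmod_gt_0. auto.
  - apply Cmod_ge_0.
  - apply Cmod_gt_0. auto.
  - apply Hgain. intros am Ham. destruct (Hl am Ham) as [[Hy Hm] _].
    apply blaschke_factor_gain; auto.
Qed.
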